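(* Let $(X,d)$ be a (possibly extended) quasi-metric space and let $d'$ be either a rescaling $d'=\lambda d$ ($\lambda>0$) of $d$ or the involution $d'=d_o$ of $d$ at a point $o\in X$ which is not the point at infinity of $d$. Then $\dim_N(X,d)=\dim_N(X,d')$. In particular, if $M$ is an intrinsic Möbius structure on $X$ and $d,d'$ are any two quasi-metrics inducing $M$, then $\dim_N(X,d)=\dim_N(X,d')$, so $\dim_N(X,M):=\dim_N(X,d)$ (for any quasi-metric $d$ inducing $M$) is well defined; moreover $\dim_N(X,M)=\dim_N(X',M')$ whenever there is a Möbius equivalence between intrinsic Möbius spaces $(X,M)$ and $(X',M')$.
   Context: Let $X$ be a set with at least three points. A semi-metric is a symmetric map $d:X\times X\to[0,\infty)$ with $d(x,y)=0\iff x=y$. An extended semi-metric is a map $d:X\times X\to[0,\infty]$, symmetric with $d(x,y)=0\iff x=y$, for which there is exactly one point $\infty\in X$ (the point at infinity) with $d(x,\infty)=\infty$ for $x\neq\infty$ and $d(x,y)<\infty$ for $x,y\neq\infty$. For $K\ge1$, a (possibly extended) $K$-quasi-metric is a (possibly extended) semi-metric with $d(x,y)\le K\max(d(x,z),d(z,y))$ for all $x,y,z$; a quasi-metric is a $K$-quasi-metric for some $K$. Involution: for $o\in X$ other than the point at infinity, $d_o(x,x)=0$, $d_o(x,y)=\frac{d(x,y)}{d(x,o)d(o,y)}$ for distinct $x,y\ne\infty$, $d_o(\infty,y)=1/d(o,y)$ and $d_o(x,\infty)=1/d(x,o)$ for the respective distinct points, with $\lambda/0=\infty$ for $\lambda>0$.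 Nagata dimension of a (possibly extended) quasi-metric space $(X,d)$ (with point at infinity $\infty$, if any): diameters are taken with respect to $d$. A cover $\mathcal B$ of $X\setminus\{\infty\}$ is $C$-bounded if every $B\in\mathcal B$ has $\mathrm{diam}(B)\le C$. A family $\mathcal B$ of subsets has $s$-multiplicity $\le m$ if every $U\subset X$ with $\mathrm{diam}(U)\le s$ meets at most $m$ elements of $\mathcal B$. $\dim_N(X,d)$ is the infimum of all $n$ for which there is $c>0$ such that for every $s>0$ there is a $cs$-bounded cover of $X\setminus\{\infty\}$ with $s$-multiplicity $\le n+1$. Möbius structures: Admissible quadruples $\mathcal A_4$: quadruples in $X^4$ in which no point appears more than twice; non-degenerate means all entries distinct. Let $\overline\Delta=\{(a:b:c)\in\mathbb RP^2:a,b,c>0\}\cup\{(1:1:0),(1:0:1),(0:1:1)\}$. The cross-ratio triple of $d$ is $crt_d(wxyz)=(d(w,x)d(y,z):d(w,y)d(z,x):d(w,z)d(x,y))$, where infinite distances cancel: $crt_d(\infty xyz)=(d(y,z):d(z,x):d(x,y))$, $crt_d(\infty\infty yz)=(0:1:1)$, and analogously for permutations. Let $L_4=\{(x,y,z)\in\mathbb R^3:x+y+z=0\}$, $\overline{L_4}=L_4\cup\{(0,\infty,-\infty),(-\infty,0,\infty),(\infty,-\infty,0)\}$, $\overline\Phi:\overline\Delta\to\overline{L_4}$, $(a:b:c)\mapsto(\ln(b/c),\ln(c/a),\ln(a/b))$, extended by $(1:1:0)\mapsto(\infty,-\infty,0)$, $(1:0:1)\mapsto(-\infty,0,\infty)$,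 $(0:1:1)\mapsto(0,\infty,-\infty)$. Let $\varphi:\mathcal S_4\to\mathcal S_3$ be the homomorphism given by the induced permutation of the triple $((12)(34),(13)(42),(14)(23))$; $\mathcal S_3$ acts on $\overline{L_4}$ by permuting coordinates. A generalized Möbius structure is a map $M:\mathcal A_4\to\overline{L_4}$ with: (1) $M(\pi P)=\mathrm{sgn}(\pi)\varphi(\pi)M(P)$; (2) $M(P)\in L_4$ iff $P$ is non-degenerate; (3) $M(xxyz)=(0,\infty,-\infty)$; (4) for every admissible 5-tuple $(x,y,\omega,\alpha,\beta)$ with $(\omega,\alpha,\beta)$ non-degenerate, $\alpha\ne x\ne\beta$, $\alpha\ne y\ne\beta$, there is $\lambda\in\mathbb R\cup\{\pm\infty\}$ with $M(\alpha x\omega\beta)+M(\alpha\omega y\beta)-M(\alpha xy\beta)=(\lambda,-\lambda,0)$, the first component of the left side being well defined when $x\ne\beta$, $y\ne\alpha$ and the second when $x\ne\alpha$, $y\ne\beta$. Put $crt=\overline\Phi^{-1}\circ M$; $d$ induces $M$ if $crt=crt_d$. $M$ is intrinsic if the closure of the image of $crt$ in $\mathbb RP^2$ contains none of $(1:0:0),(0:1:0),(0:0:1)$. A Möbius equivalence is a bijection $f$ with $M'(f(w)f(x)f(y)f(z))=M(wxyz)$ for all admissible quadruples. *)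

From mathcomp Require Import all_boot fingroup perm.
From Stdlib Require Import Reals ClassicalEpsilon.
From Coquelicot Require Import Coquelicot.

Set Implicit Arguments.
Unset Strict Implicit.
Unset Printing Implicit Defensive.

Local Open Scope R_scope.

Section Defs.

Variable X : Type.
Implicit Types (d : X -> X -> Rbar).

Definition decP (P : Prop) : bool :=
  if excluded_middle_informative P then true else false.

Definition Rbar_max (a b : Rbar) : Rbar :=
  if decP (Rbar_lt a b) then b else a.

Definition at_least_three_points : Prop :=
  exists a b c : X, a <> b /\ b <> c /\ a <> c.

Definition is_inf d (x : X) : Prop := forall y, y <> x -> d y x = p_infty.

Definition semi_metric d : Prop :=
  (forall x y, d x y = d y x) /\
  (forall x y, is_finite (d x y) /\ Rbar_le (Finite 0) (d x y)) /\
  (forall x y, d x y = Finite 0 <-> x = y).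

Definition ext_semi_metric d : Prop :=
  (forall x y, d x y = d y x) /\
  (forall x y, Rbar_le (Finite 0) (d x y)) /\
  (forall x y, d x y = Finite 0 <-> x = y) /\
  (exists! p : X, (forall x, x <> p -> d x p = p_infty) /\
                  (forall x y, x <> p -> y <> p -> is_finite (d x y))).

Definition K_quasi_ineq (K : R) d : Prop :=
  forall x y z, Rbar_le (d x y) (Rbar_mult (Finite K) (Rbar_max (d x z) (d z y))).

Definition quasi_metric d : Prop :=
  (semi_metric d \/ ext_semi_metric d) /\
  exists K : R, 1 <= K /\ K_quasi_ineq K d.

Definition rescale (lam : R) d : X -> X -> Rbar :=
  fun x y => Rbar_mult (Finite lam) (d x y).

Definition divR (a b : R) : Rbar :=
  if decP (b = 0) then p_infty else Finite (a / b).

Definition involution d (o : X) : X -> X -> Rbar :=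
  fun x y =>
    if decP (x = y) then Finite 0
    else if decP (is_inf d x) then divR 1 (real (d o y))
    else if decP (is_inf d y) then divR 1 (real (d x o))
    else divR (real (d x y)) (real (d x o) * real (d o y)).

(* diameter (w.r.t. d), as a supremum in [-oo,+oo] (sup of the empty set is -oo) *)
Definition diam d (U : X -> Prop) : Rbar :=
  Rbar_lub (fun r => exists x y, U x /\ U y /\ r = d x y).

(* the family F (of subsets of X) has at most m elements *)
Definition at_most (m : nat) (F : (X -> Prop) -> Prop) : Prop :=
  forall f : nat -> (X -> Prop), (forall i, (i <= m)%nat -> F (f i)) ->
    exists i j, (i < j)%nat /\ (j <= m)%nat /\ f i = f j.

(* B is a cover of X \ {oo} (members are subsets of X \ {oo}) *)
Definition cover_of_finite_part d (B : (X -> Prop) -> Prop) : Prop :=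
  (forall U, B U -> forall x, U x -> ~ is_inf d x) /\
  (forall x, ~ is_inf d x -> exists U, B U /\ U x).

Definition bounded_cover d (C : R) (B : (X -> Prop) -> Prop) : Prop :=
  forall U, B U -> Rbar_le (diam d U) (Finite C).

Definition s_multiplicity_le d (s : R) (m : nat) (B : (X -> Prop) -> Prop) : Prop :=
  forall V : X -> Prop, Rbar_le (diam d V) (Finite s) ->
    at_most m (fun U => B U /\ exists x, U x /\ V x).

Definition nagata_witness d (n : nat) : Prop :=
  exists c : R, 0 < c /\
    forall s : R, 0 < s -> exists B : (X -> Prop) -> Prop,
      cover_of_finite_part d B /\ bounded_cover d (c * s) B /\
      s_multiplicity_le d s n.+1 B.

(* dim_N(X,d) = inf of all n admitting such c; +oo if there is none *)
Definition dimN d : Rbar :=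
  Rbar_glb (fun r => exists n : nat, r = Finite (INR n) /\ nagata_witness d n).

Definition quad := 'I_4 -> X.

Definition mkquad (a b c e : X) : quad :=
  fun i => match val i with 0 => a | 1 => b | 2 => c | _ => e end.

Definition mk5 (a b c e g : X) : 'I_5 -> X :=
  fun i => match val i with 0 => a | 1 => b | 2 => c | 3 => e | _ => g end.

(* no point appears more than twice *)
Definition admissible (n : nat) (P : 'I_n -> X) : Prop :=
  forall i j k : 'I_n, i <> j -> j <> k -> i <> k -> ~ (P i = P j /\ P j = P k).

Definition nondegenerate (P : quad) : Prop := injective P.

Definition get3 {T : Type} (v : T * T * T) (k : nat) : T :=
  match k with 0 => v.1.1 | 1 => v.1.2 | _ => v.2 end.

(* cross-ratio triple of d, as a representative in R^3 of the point of RP^2;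
   coordinates correspond to the pairings (12)(34), (13)(42), (14)(23).
   Infinite distances cancel: in each product d(u1,v1)d(u2,v2) every factor
   equal to oo (u<>v, one of them the point at infinity) is counted, and the
   common maximal power of oo is cancelled (products with fewer oo factors
   become 0). *)
Definition infpair d (u v : X) : bool := decP (u <> v /\ (is_inf d u \/ is_inf d v)).
Definition fpart d (u v : X) : R := if infpair d u v then 1 else real (d u v).
Definition ninf d (u v : X) : nat := if infpair d u v then 1%nat else 0%nat.

Definition crt_prod d (u1 v1 u2 v2 : X) : nat * R :=
  ((ninf d u1 v1 + ninf d u2 v2)%nat, fpart d u1 v1 * fpart d u2 v2).

Definition crt_d d (P : quad) : R * R * R :=
  let p0 := P (inord 0) in let p1 := P (inord 1) in
  let p2 := P (inord 2) in let p3 := P (inord 3) in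
  let A := crt_prod d p0 p1 p2 p3 in
  let B := crt_prod d p0 p2 p3 p1 in
  let C := crt_prod d p0 p3 p1 p2 in
  let m := maxn A.1 (maxn B.1 C.1) in
  ((if A.1 == m then A.2 else 0), (if B.1 == m then B.2 else 0),
   (if C.1 == m then C.2 else 0)).

(* \bar Phi : \bar Delta -> \bar L_4 on representatives *)
Definition Phibar (v : R * R * R) : Rbar * Rbar * Rbar :=
  let a := v.1.1 in let b := v.1.2 in let c := v.2 in
  if decP (0 < a /\ 0 < b /\ 0 < c) then
    (Finite (ln (b / c)), Finite (ln (c / a)), Finite (ln (a / b)))
  else if decP (c = 0) then (p_infty, m_infty, Finite 0)
  else if decP (b = 0) then (m_infty, Finite 0, p_infty)
  else (Finite 0, p_infty, m_infty).

(* \bar Phi^{-1}, with values normalised to the simplex a+b+c = 1 *)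
Definition Phibar_inv (v : Rbar * Rbar * Rbar) : R * R * R :=
  match v with
  | (Finite x, Finite y, Finite z) =>
      let s := 1 + exp (- z) + exp y in (1 / s, exp (- z) / s, exp y / s)
  | _ =>
    if decP (v = (p_infty, m_infty, Finite 0)) then (1/2, 1/2, 0)
    else if decP (v = (m_infty, Finite 0, p_infty)) then (1/2, 0, 1/2)
    else if decP (v = (Finite 0, p_infty, m_infty)) then (0, 1/2, 1/2)
    else (0, 0, 0)
  end.

Definition in_L4 (v : Rbar * Rbar * Rbar) : Prop :=
  exists x y z : R, v = (Finite x, Finite y, Finite z) /\ x + y + z = 0.

Definition in_L4bar (v : Rbar * Rbar * Rbar) : Prop :=
  in_L4 v \/ v = (Finite 0, p_infty, m_infty) \/ v = (m_infty, Finite 0, p_infty)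
  \/ v = (p_infty, m_infty, Finite 0).

(* phi : S_4 -> S_3, induced permutation of the pairings; pairing k is the
   one pairing position 0 with position k+1 *)
Definition pairing_index (i j : 'I_4) : nat :=
  if val i == 0%nat then (val j).-1
  else if val j == 0%nat then (val i).-1
  else (5 - val i - val j)%nat.

Definition phi (p : {perm 'I_4}) (k : nat) : nat :=
  pairing_index (p (inord 0)) (p (inord k.+1)).

Definition sgn_act (p : {perm 'I_4}) (r : Rbar) : Rbar :=
  if odd_perm p then Rbar_opp r else r.

(* the permuted quadruple pi P (entry P_j moved to position pi(j)) *)
Definition perm_quad (p : {perm 'I_4}) (P : quad) : quad :=
  fun i => P ((p^-1)%g i).

Definition opt_plus (a b : option Rbar) : option Rbar :=
  match a, b with Some x, Some y => Rbar_plus' x y | _, _ => None end.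

Definition mobius_structure (M : quad -> Rbar * Rbar * Rbar) : Prop :=
  (forall P, admissible P -> in_L4bar (M P)) /\
  (* (1) M(pi P) = sgn(pi) phi(pi) M(P), with S_3 permuting coordinates *)
  (forall (p : {perm 'I_4}) (P : quad), admissible P ->
     forall k, (k < 3)%nat ->
       get3 (M (perm_quad p P)) (phi p k) = sgn_act p (get3 (M P) k)) /\
  (forall P, admissible P -> (in_L4 (M P) <-> nondegenerate P)) /\
  (forall x y z, admissible (mkquad x x y z) ->
     M (mkquad x x y z) = (Finite 0, p_infty, m_infty)) /\
  (forall x y w a b : X, admissible (mk5 x y w a b) ->
     w <> a -> w <> b -> a <> b -> a <> x -> x <> b -> a <> y -> y <> b ->
     exists lam : Rbar,
       let S k := opt_plus (opt_plus (Some (get3 (M (mkquad a x w b)) k))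
                                     (Some (get3 (M (mkquad a w y b)) k)))
                           (Some (Rbar_opp (get3 (M (mkquad a x y b)) k))) in
       S 0%nat = Some lam /\ S 1%nat = Some (Rbar_opp lam) /\ S 2%nat = Some (Finite 0)).

(* crt = Phibar^{-1} o M coincides with crt_d *)
Definition induces d (M : quad -> Rbar * Rbar * Rbar) : Prop :=
  forall P, admissible P -> M P = Phibar (crt_d d P).

Definition sup_dist3 (u v : R * R * R) : R :=
  Rmax (Rabs (u.1.1 - v.1.1)) (Rmax (Rabs (u.1.2 - v.1.2)) (Rabs (u.2 - v.2))).

(* (1:0:0), (0:1:0), (0:0:1) are not in the closure of the image of crt *)
Definition intrinsic (M : quad -> Rbar * Rbar * Rbar) : Prop :=
  forall e, (e = (1, 0, 0) \/ e = (0, 1, 0) \/ e = (0, 0, 1)) ->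
    exists eps, 0 < eps /\
      forall P, admissible P -> eps <= sup_dist3 (Phibar_inv (M P)) e.

End Defs.

Definition mobius_equivalence (X X' : Type) (M : quad X -> Rbar * Rbar * Rbar)
  (M' : quad X' -> Rbar * Rbar * Rbar) (f : X -> X') : Prop :=
  bijective f /\
  forall P : quad X, admissible P -> M' (fun i => f (P i)) = M P.

From Pilot Require Import Defs.
From mathcomp Require Import all_boot fingroup perm.
From Stdlib Require Import Reals ClassicalEpsilon.
From Coquelicot Require Import Coquelicot.
From Stdlib Require Import Lra Lia Classical FunctionalExtensionality PropExtensionality.
From mathcomp Require Import zify.

Set Implicit Arguments.
Unset Strict Implicit.
Local Open Scope R_scope.

(* Rescaling multiplies the scales of all Nagata covers by the same factor.  The involution
   d_o and d are reweightings of each other: d_o(x,y) = d(x,y) / (g x * g y) with g = d(., o),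
   and d(x,y) = d_o(x,y) / (g' x * g' y) with g' = 1 / d(., o); both weights obey a Harnack
   inequality (g is comparable at nearby points where it is large).  Covers pass through such a
   reweighting: cut X into the ball {g <= a} and the annuli {a L^(k-1) < g <= a L^k}, on which
   the two metrics agree up to the factor (a L^(k-1))^2, cover the annuli by traces of covers for
   the other metric, alternately at a fine (odd k) and a coarse (even k) scale, and glue each fine
   piece to a nearby coarse one.  A set of small diameter meets at most two consecutive annuli,
   and by Harnack the fine pieces it meets glue to coarse pieces of a single level, so the
   multiplicity does not grow.  If d and d' induce the same Moebius structure, the cross-ratio
   triples of the quadruples (o, x, y, z) force d_o and d'_o to be proportional, and a Moebius
   equivalence transports d' to a quasi-metric on X inducing the same structure as d. *)

Lemma decP_true (P : Prop) : P -> Defs.decP P = true.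
Proof. by rewrite /Defs.decP; case: excluded_middle_informative. Qed.

Lemma decP_false (P : Prop) : ~ P -> Defs.decP P = false.
Proof. by rewrite /Defs.decP; case: excluded_middle_informative. Qed.

Lemma decP_spec (P : Prop) : Defs.decP P = true <-> P.
Proof. by rewrite /Defs.decP; case: excluded_middle_informative. Qed.

Lemma Rbar_max_finite (a b : R) :
  Rbar_max (Finite a) (Finite b) = Finite (Rmax a b).
Proof.
rewrite /Rbar_max /Rmax; case: (Rlt_dec a b) => hab.
- by rewrite decP_true //; case: Rle_dec => h; f_equal; lra.
- by rewrite decP_false //; case: Rle_dec => h; f_equal; lra.
Qed.

Lemma exists_neq2 (X : Type) :
  at_least_three_points X -> forall x y : X, exists z, z <> x /\ z <> y.
Proof.
move=> [a [b [c [hab [hbc hac]]]]] x y.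
case: (classic (a = x)) => ax; case: (classic (a = y)) => ay; subst.
- by exists b; split; congruence.
- by case: (classic (b = y)) => hb; [exists c | exists b]; split; congruence.
- by case: (classic (b = x)) => hb; [exists c | exists b]; split; congruence.
- by exists a.
Qed.

Lemma diam_leP (X : Type) (d : X -> X -> Rbar) (U : X -> Prop) (a : R) :
  Rbar_le (diam d U) (Finite a) <-> forall x y, U x -> U y -> Rbar_le (d x y) (Finite a).
Proof.
rewrite /diam /Rbar_lub.
case: (Rbar_ex_lub _) => l /= [hub hleast]; split.
- by move=> hl x y Ux Uy; apply: Rbar_le_trans hl; apply: hub; exists x, y.
- by move=> h; apply: hleast => _ [x [y [Ux [Uy ->]]]]; apply: h.
Qed.

Lemma at_most_image (X Y : Type) (m : nat) (F : (X -> Prop) -> Prop)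
    (G : (Y -> Prop) -> Prop) (phi : (Y -> Prop) -> X -> Prop) :
  (forall U, F U -> exists2 W, G W & U = phi W) -> at_most m G -> at_most m F.
Proof.
move=> hFG hG f hf.
pose P i W := (i <= m)%nat -> G W /\ f i = phi W.
pose w i := epsilon (inhabits (fun _ : Y => False)) (P i).
have hw i : P i (w i).
  apply: epsilon_spec; case hi: (i <= m)%nat.
  - by case: (hFG _ (hf i hi)) => W; exists W.
  - by exists (fun _ => False); rewrite /P hi.
have [i [j [hij [hjm ewij]]]] := hG w (fun i hi => proj1 (hw i hi)).
have him : (i <= m)%nat by lia.
by exists i, j; rewrite (proj2 (hw i him)) (proj2 (hw j hjm)) ewij.
Qed.

Lemma at_most_none (X : Type) (m : nat) (F : (X -> Prop) -> Prop) :
  (forall U, ~ F U) -> at_most m F.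
Proof. by move=> hF f hf; case: (hF (f 0%nat)); apply: hf. Qed.

Lemma at_most_one (X : Type) (m : nat) (F : (X -> Prop) -> Prop) (U0 : X -> Prop) :
  (forall U, F U -> U = U0) -> at_most m.+1 F.
Proof.
by move=> hF f hf; exists 0%nat, 1%nat; rewrite (hF _ (hf 0%nat _)) // (hF _ (hf 1%nat _)).
Qed.

Lemma dimN_ext (X Y : Type) (d : X -> X -> Rbar) (d' : Y -> Y -> Rbar) :
  (forall n, nagata_witness d n <-> nagata_witness d' n) -> dimN d = dimN d'.
Proof.
move=> h; apply: Rbar_glb_rw => r.
by split=> [[n [-> /h hn]] | [n [-> /h hn]]]; exists n.
Qed.

(** * Quasi-metrics *)

Definition finite_pt (X : Type) (d : X -> X -> Rbar) (x : X) : Prop := ~ is_inf d x.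

(* [real p_infty = 0], so [rdist d x y = 0] when exactly one of [x], [y] is the point at
   infinity of [d]. *)
Definition rdist (X : Type) (d : X -> X -> Rbar) (x y : X) : R := real (d x y).

Record qmetric (X : Type) (d : X -> X -> Rbar) (K : R) : Prop := {
  qm_K_ge1 : 1 <= K;
  qm_sym : forall x y, d x y = d y x;
  qm_finite : forall x y, finite_pt d x -> finite_pt d y -> d x y = Finite (rdist d x y);
  qm_ge0 : forall x y, 0 <= rdist d x y;
  qm_eq0 : forall x y, finite_pt d x -> finite_pt d y -> rdist d x y = 0 -> x = y;
  qm_diag : forall x, d x x = Finite 0;
  qm_quasi : forall x y z, finite_pt d x -> finite_pt d y -> finite_pt d z ->
    rdist d x y <= K * Rmax (rdist d x z) (rdist d z y);
  qm_inf_uniq : forall x y, is_inf d x -> is_inf d y -> x = y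
}.

Lemma K_quasi_ineq_finite (X : Type) (d : X -> X -> Rbar) (K : R) (x y z : X) (a b c : R) :
  K_quasi_ineq K d -> d x y = Finite a -> d x z = Finite b -> d z y = Finite c ->
  a <= K * Rmax b c.
Proof. by move=> hq hxy hxz hzy; move: (hq x y z); rewrite hxy hxz hzy Rbar_max_finite. Qed.

Lemma qmetric_of_semi_metric (X : Type) (d : X -> X -> Rbar) (K : R) :
  at_least_three_points X -> semi_metric d -> 1 <= K -> K_quasi_ineq K d -> qmetric d K.
Proof.
move=> h3 [hsym [hfin h0]] hK hq.
have dE x y : d x y = Finite (rdist d x y) by case: (hfin x y).
have hfinite x : finite_pt d x.
  move=> hx; have [y [hy _]] := exists_neq2 h3 x x.
  by move: (hx y hy); rewrite dE.
constructor=> //.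
- by move=> x y; have [_] := hfin x y; rewrite dE.
- by move=> x y _ _ e; apply/h0; rewrite dE e.
- by move=> x; apply/h0.
- by move=> x y z _ _ _; apply: K_quasi_ineq_finite hq (dE x y) (dE x z) (dE z y).
- by move=> x y hx; case: (hfinite x).
Qed.

Lemma qmetric_of_ext_semi_metric (X : Type) (d : X -> X -> Rbar) (K : R) :
  at_least_three_points X -> ext_semi_metric d -> 1 <= K -> K_quasi_ineq K d -> qmetric d K.
Proof.
move=> h3 [hsym [hge0 [h0 [p [[hp hpfin] _]]]]] hK hq.
have inf_p : is_inf d p by move=> y hy; apply: hp.
have finite_ne x : x <> p -> finite_pt d x.
  move=> hx hinf; have [y [hyx hyp]] := exists_neq2 h3 x p.
  by move: (hpfin y x hyp hx); rewrite /is_finite (hinf y hyx).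
have ne_finite x : finite_pt d x -> x <> p by move=> hx e; apply: hx; rewrite e.
have dE x y : finite_pt d x -> finite_pt d y -> d x y = Finite (rdist d x y).
  by move=> hx hy; rewrite -[LHS](hpfin x y (ne_finite x hx) (ne_finite y hy)).
constructor=> //.
- by move=> x y; rewrite /rdist; move: (hge0 x y); case: (d x y) => //= _; lra.
- by move=> x y hx hy e; apply/h0; rewrite dE // e.
- by move=> x; apply/h0.
- by move=> x y z hx hy hz; apply: K_quasi_ineq_finite hq (dE x y hx hy) (dE x z hx hz) (dE z y hz hy).
- move=> x y hx hy.
  case: (classic (x = p)) => [-> | /finite_ne //]; case: (classic (y = p)) => [-> // | /finite_ne //].
Qed.

Lemma qmetric_of_quasi_metric (X : Type) (d : X -> X -> Rbar) :
  at_least_three_points X -> quasi_metric d -> exists K, qmetric d K.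
Proof.
move=> h3 [[hd | hd] [K [hK hq]]]; exists K.
- exact: qmetric_of_semi_metric.
- exact: qmetric_of_ext_semi_metric.
Qed.

Lemma Rmax_cases a b : (Rmax a b = a /\ b <= a) \/ (Rmax a b = b /\ a <= b).
Proof. by rewrite /Rmax; case: Rle_dec => h; [right | left]; split=> //; lra. Qed.

Section QuasiMetric.
Variables (X : Type) (d : X -> X -> Rbar) (K : R).
Hypothesis hd : qmetric d K.

Lemma rdist_sym x y : rdist d x y = rdist d y x.
Proof. by rewrite /rdist (qm_sym hd). Qed.

Lemma rdist_diag x : rdist d x x = 0.
Proof. by rewrite /rdist (qm_diag hd). Qed.

Lemma rdist_gt0 x y : finite_pt d x -> finite_pt d y -> x <> y -> 0 < rdist d x y.
Proof.
move=> hx hy hxy; have := qm_ge0 hd x y; case/Rle_lt_or_eq_dec => // /esym e.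
by case: hxy; apply: (qm_eq0 hd).
Qed.

Lemma rdist_inf x y : is_inf d y -> x <> y -> rdist d x y = 0.
Proof. by move=> hy hxy; rewrite /rdist hy. Qed.

Lemma finite_pt_of_inf x y : is_inf d y -> x <> y -> finite_pt d x.
Proof. by move=> hy hxy hx; apply: hxy; apply: (qm_inf_uniq hd). Qed.

Lemma rdist_quasi_le x y z a b : finite_pt d x -> finite_pt d y -> finite_pt d z ->
  rdist d x z <= a -> rdist d z y <= b -> rdist d x y <= K * (a + b).
Proof.
move=> hx hy hz hxz hzy; apply: Rle_trans (qm_quasi hd hx hy hz) _.
have := Rmax_le_Rplus _ _ (qm_ge0 hd x z) (qm_ge0 hd z y).
have := qm_K_ge1 hd; nra.
Qed.

Lemma rdist_harnack o t x y : finite_pt d o -> finite_pt d x -> finite_pt d y ->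
  rdist d x y <= t -> K * t < rdist d x o ->
  rdist d x o <= K * rdist d y o /\ rdist d y o <= K * rdist d x o.
Proof.
move=> ho hx hy hxy ht; have hK := qm_K_ge1 hd.
have q1 := qm_quasi hd hx ho hy; have q2 := qm_quasi hd hy ho hx.
rewrite (rdist_sym y x) in q2.
have hKt : K * rdist d x y <= K * t by apply: Rmult_le_compat_l; lra.
have := qm_ge0 hd x o; have := qm_ge0 hd y o => hyo hxo.
split.
- by case: (Rmax_cases (rdist d x y) (rdist d y o)) => -[e _]; rewrite e in q1; nra.
- by case: (Rmax_cases (rdist d x y) (rdist d x o)) => -[e _]; rewrite e in q2; nra.
Qed.

Lemma rdist_ball o a x y : finite_pt d o -> finite_pt d x -> finite_pt d y ->
  rdist d x o <= a -> rdist d y o <= a -> rdist d x y <= K * a.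
Proof.
move=> ho hx hy hxo hyo; apply: Rle_trans (qm_quasi hd hx hy ho) _.
apply: Rmult_le_compat_l; first by have := qm_K_ge1 hd; lra.
by apply: Rmax_lub; rewrite // rdist_sym.
Qed.

End QuasiMetric.

(** * Rescaling and pulling back *)

Lemma Rbar_mult_pos_pinfty (lam : R) : 0 < lam -> Rbar_mult (Finite lam) p_infty = p_infty.
Proof. by move=> hl /=; case: Rle_dec => [h | ]; [case: Rle_lt_or_eq_dec => // | ]; lra. Qed.

Lemma Rbar_mult_pos_minfty (lam : R) : 0 < lam -> Rbar_mult (Finite lam) m_infty = m_infty.
Proof. by move=> hl /=; case: Rle_dec => [h | ]; [case: Rle_lt_or_eq_dec => // | ]; lra. Qed.

Lemma Rbar_mult_pos_le (lam : R) (v : Rbar) (a : R) : 0 < lam ->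
  Rbar_le (Rbar_mult (Finite lam) v) (Finite (lam * a)) <-> Rbar_le v (Finite a).
Proof.
move=> hl; case: v => [r | | ].
- by rewrite /=; split=> h; [apply: (Rmult_le_reg_l lam) | apply: Rmult_le_compat_l]; lra.
- by rewrite Rbar_mult_pos_pinfty.
- by rewrite Rbar_mult_pos_minfty.
Qed.

Section Rescale.
Variables (X : Type) (d : X -> X -> Rbar) (lam : R).
Hypothesis hlam : 0 < lam.

Lemma is_inf_rescale x : is_inf (rescale lam d) x <-> is_inf d x.
Proof.
split=> hx y hy; move: (hx y hy); rewrite /rescale.
- by case: (d y x) => [r | | ] //; rewrite Rbar_mult_pos_minfty.
- by move=> ->; apply: Rbar_mult_pos_pinfty.
Qed.

Lemma rescale_inv : rescale (/ lam) (rescale lam d) = d.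
Proof.
have hi : 0 < / lam by apply: Rinv_0_lt_compat.
apply: functional_extensionality => x; apply: functional_extensionality => y.
rewrite /rescale; case: (d x y) => [r | | ].
- by rewrite /=; f_equal; field; lra.
- by rewrite !Rbar_mult_pos_pinfty.
- by rewrite !Rbar_mult_pos_minfty.
Qed.

Lemma nagata_witness_rescale n : nagata_witness d n -> nagata_witness (rescale lam d) n.
Proof.
move=> [c [hc hW]]; exists c; split=> // s hs.
have [B [[hBsub hBcov] [hBdiam hBmult]]] := hW (s / lam) (Rdiv_lt_0_compat _ _ hs hlam).
exists B; split; [split | split].
- by move=> U hU x hx /is_inf_rescale; apply: hBsub hx.
- by move=> x hx; apply: hBcov => /is_inf_rescale.
- move=> U hU; apply/diam_leP => x y hx hy.
  have -> : c * s = lam * (c * (s / lam)) by field; lra.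
  by apply/Rbar_mult_pos_le => //; move/diam_leP: (hBdiam U hU); apply.
- move=> V hV; apply: hBmult; apply/diam_leP => x y hx hy.
  apply/(Rbar_mult_pos_le _ _ hlam).
  have -> : lam * (s / lam) = s by field; lra.
  by move/diam_leP: hV; apply.
Qed.

End Rescale.

Lemma dimN_rescale (X : Type) (d : X -> X -> Rbar) (lam : R) :
  0 < lam -> dimN d = dimN (rescale lam d).
Proof.
move=> hlam; apply: dimN_ext => n; split; first exact: nagata_witness_rescale.
rewrite -{2}(rescale_inv d hlam); apply: nagata_witness_rescale.
exact: Rinv_0_lt_compat.
Qed.

Definition pullback (X Y : Type) (f : X -> Y) (d : Y -> Y -> Rbar) : X -> X -> Rbar :=
  fun x y => d (f x) (f y).

Section Pullback.
Variables (X Y : Type) (f : X -> Y) (g : Y -> X) (d : Y -> Y -> Rbar).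
Hypotheses (fK : cancel f g) (gK : cancel g f).

Lemma is_inf_pullback x : is_inf (pullback f d) x <-> is_inf d (f x).
Proof.
split=> hx y hy.
- by rewrite -(gK y); apply: hx => e; apply: hy; rewrite -e gK.
- by apply: hx => e; apply: hy; rewrite -(fK y) e fK.
Qed.

Lemma nagata_witness_pullback n : nagata_witness d n -> nagata_witness (pullback f d) n.
Proof.
move=> [c [hc hW]]; exists c; split=> // s hs.
have [B [[hBsub hBcov] [hBdiam hBmult]]] := hW s hs.
exists (fun U => exists2 U', B U' & U = fun x => U' (f x)); split; [split | split].
- by move=> _ [U' hU' ->] x hx /is_inf_pullback; apply: hBsub hx.
- move=> x hx; have [U' [hU' hU'x]] : exists U', B U' /\ U' (f x).
    by apply: hBcov => /is_inf_pullback.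
  by exists (fun x => U' (f x)); split=> //; exists U'.
- move=> _ [U' hU' ->]; apply/diam_leP => x y hx hy.
  by move/diam_leP: (hBdiam U' hU'); apply.
- move=> V hV.
  apply: (at_most_image (G := fun U' => B U' /\ exists x, U' x /\ V (g x))).
  + move=> _ [[U' hU' ->] [x [hx hVx]]]; exists U' => //.
    by split=> //; exists (f x); rewrite fK.
  + apply: hBmult; apply/diam_leP => x y hx hy.
    by move/diam_leP: hV => /(_ _ _ hx hy); rewrite /pullback !gK.
Qed.

End Pullback.

Lemma dimN_pullback (X Y : Type) (f : X -> Y) (d : Y -> Y -> Rbar) :
  bijective f -> dimN (pullback f d) = dimN d.
Proof.
move=> [g fK gK]; apply: dimN_ext => n; split; last exact: nagata_witness_pullback.
move/(nagata_witness_pullback gK fK).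
have -> // : pullback g (pullback f d) = d.
by apply: functional_extensionality => x; apply: functional_extensionality => y; rewrite /pullback !gK.
Qed.

(** * Reweighted quasi-metrics *)

Lemma INR_le_pow (L : R) (k : nat) : 2 <= L -> INR k <= L ^ k.
Proof.
move=> hL; have h := Rle_pow_lin (L - 1) k (ltac:(lra)).
rewrite (_ : 1 + (L - 1) = L) in h; last ring.
by have := pos_INR k; nra.
Qed.

Section Weighted.
Variables (X : Type) (d1 d2 : X -> X -> Rbar) (g : X -> R) (K0 K2 : R).
Hypotheses (hd2 : qmetric d2 K2) (hK0 : 1 <= K0).

Local Notation D := (rdist d2).
Local Notation fin := (finite_pt d2).

Hypothesis g_ge0 : forall x, fin x -> 0 <= g x.
Hypothesis d1_weighted : forall x y, fin x -> fin y -> 0 < g x -> 0 < g y ->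
  finite_pt d1 x /\ d1 x y = Finite (D x y / (g x * g y)).
Hypothesis g_harnack : forall t x y, fin x -> fin y -> D x y <= t -> K0 * t < g x ->
  g x <= K0 * g y /\ g y <= K0 * g x.
Hypothesis g_ball : forall a x y, fin x -> fin y -> g x <= a -> g y <= a -> D x y <= K0 * a.

Section Construction.
Variables (n : nat) (c : R) (Cov : R -> (X -> Prop) -> Prop).
Hypothesis hc : 0 < c.
Hypothesis hCov : forall sg, 0 < sg -> cover_of_finite_part d1 (Cov sg) /\
  bounded_cover d1 (c * sg) (Cov sg) /\ s_multiplicity_le d1 sg n.+1 (Cov sg).

(* All scales are linear in [s]: [base s] bounds [g] on the central ball, the annulus of level
   [k >= 1] is [base s * Lam ^ k.-1 < g <= base s * Lam ^ k], and pieces of odd (fine) and even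
   (coarse) level have [d2]-diameters at most [fine_mesh s] and [coarse_mesh s]. *)
Definition Lam := 2 * K0 ^ 3.
Definition fine_mesh s := c * Lam ^ 2 * s.
Definition near_rad s := K2 * (fine_mesh s + s).
Definition coarse_scale s := K2 ^ 2 * (2 * near_rad s + s).
Definition base s := K0 * (s + fine_mesh s).
Definition coarse_mesh s := c * coarse_scale s * Lam ^ 2 + K0 * base s.
Definition mesh s := 2 * K2 ^ 3 * (fine_mesh s + s + coarse_mesh s).

Lemma mesh_linear s : mesh s = mesh 1 * s.
Proof.
by rewrite /mesh /coarse_mesh /base /coarse_scale /near_rad /fine_mesh; ring.
Qed.

Lemma Lam_ge : 2 <= Lam /\ K0 < Lam /\ K0 ^ 3 < Lam.
Proof.
rewrite /Lam; have : K0 <= K0 ^ 3 by rewrite /=; nra.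
have : 1 <= K0 ^ 3 by apply: pow_R1_Rle.
split; [| split]; lra.
Qed.

Lemma pow_Lam_ge1 j : 1 <= Lam ^ j.
Proof. by apply: pow_R1_Rle; have := Lam_ge; lra. Qed.

Section Scale.
Variable s : R.
Hypothesis hs : 0 < s.

Local Notation a0 := (base s).
Local Notation dl := (fine_mesh s).
Local Notation rho := (near_rad s).
Local Notation S := (coarse_scale s).
Local Notation Dc := (coarse_mesh s).

Lemma fine_mesh_gt0 : 0 < dl.
Proof. by rewrite /fine_mesh; have := pow_Lam_ge1 2; have := Rmult_lt_0_compat _ _ hc hs; nra. Qed.

Lemma near_rad_gt0 : 0 < rho.
Proof. by rewrite /near_rad; have := qm_K_ge1 hd2; have := fine_mesh_gt0; nra. Qed.

Lemma coarse_scale_gt0 : 0 < S.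
Proof.
have hK2 : 0 < K2 ^ 2 by apply: pow_lt; have := qm_K_ge1 hd2; lra.
by rewrite /coarse_scale; have := near_rad_gt0; nra.
Qed.

Lemma base_gt0 : 0 < a0.
Proof. by rewrite /base; have := fine_mesh_gt0; nra. Qed.

Lemma coarse_mesh_gt0 : 0 < Dc.
Proof.
have hcS : 0 < c * S by apply: Rmult_lt_0_compat => //; apply: coarse_scale_gt0.
by rewrite /coarse_mesh; have := pow_Lam_ge1 2; have := base_gt0; nra.
Qed.

Lemma base_large : K0 * s < a0 /\ K0 * dl < a0.
Proof. by have := fine_mesh_gt0; rewrite /base; split; nra. Qed.

Lemma lev_ex x : exists k, Defs.decP (g x <= a0 * Lam ^ k).
Proof.
have ha0 := base_gt0; have [hL _] := Lam_ge.
have [k hk] := INR_unbounded (g x / a0); exists k; apply/decP_spec.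
have := INR_le_pow k hL; have : g x < INR k * a0.
  by apply: (Rmult_lt_reg_r (/ a0)); [apply: Rinv_0_lt_compat | field_simplify]; lra.
nra.
Qed.

Definition lev x : nat := ex_minn (lev_ex x).

Lemma lev_le x k : (lev x <= k)%nat <-> g x <= a0 * Lam ^ k.
Proof.
have ha0 := base_gt0; have [hL _] := Lam_ge.
rewrite /lev; case: ex_minnP => m /decP_spec hm hmin; split=> [hk | hk].
- apply: Rle_trans hm _; apply: Rmult_le_compat_l; first lra.
  by apply: Rle_pow; [lra | apply/leP].
- exact/hmin/decP_spec.
Qed.

Lemma lev_gt x k : (k < lev x)%nat <-> a0 * Lam ^ k < g x.
Proof.
rewrite ltnNge; split=> [/negP hk | hk]; last by apply/negP => /lev_le; lra.
by apply: Rnot_le_lt => /lev_le.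
Qed.

Lemma lev_succ_bounds x j : lev x = j.+1 -> a0 * Lam ^ j < g x /\ g x <= a0 * Lam ^ j.+1.
Proof. by move=> e; split; [apply/lev_gt | apply/lev_le]; rewrite e. Qed.

Lemma g_gt0_of_lev_succ x j : lev x = j.+1 -> 0 < g x.
Proof.
move=> /lev_succ_bounds [h _]; have ha0 := base_gt0.
by have := pow_Lam_ge1 j; nra.
Qed.

Lemma g_le_base_of_lev0 x : lev x = 0%nat -> g x <= a0.
Proof. move=> e; have /lev_le : (lev x <= 0)%nat by rewrite e. by rewrite /= Rmult_1_r. Qed.

Lemma lev_le_succ x y t : fin x -> fin y -> D x y <= t -> K0 * t <= a0 ->
  (lev y <= (lev x).+1)%nat.
Proof.
move=> hx hy hxy ht; have ha0 := base_gt0.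
have [hL [hKL _]] := Lam_ge; case ey: (lev y) => [// | j].
have [gy _] := lev_succ_bounds ey; have := pow_Lam_ge1 j => hLj.
have hyx : D y x <= t by rewrite (rdist_sym hd2).
have [hgy _] := g_harnack hy hx hyx (ltac:(nra) : K0 * t < g y).
rewrite -ey; apply/lev_le; have /lev_le hgx := leqnn (lev x).
have := pow_Lam_ge1 (lev x) => hLx; rewrite /=.
have : K0 * g x <= K0 * (a0 * Lam ^ lev x) by apply: Rmult_le_compat_l; lra.
have : 0 < a0 * Lam ^ lev x by nra.
nra.
Qed.

Definition annulus k x := fin x /\ lev x = k.

(* On the annulus of level [k], [d1] is [d2] divided by [(base s * Lam ^ k.-1) ^ 2] up to a
   factor [Lam ^ 2]. *)
Definition piece_scale k := (if odd k then s else S) / (a0 * Lam ^ k.-1) ^ 2.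

Definition piece k (U : X -> Prop) : Prop :=
  match k with
  | 0 => U = annulus 0
  | _ => exists2 U0, Cov (piece_scale k) U0 & U = (fun x => U0 x /\ annulus k x)
  end.

Lemma piece_scale_gt0 k : 0 < piece_scale k.
Proof.
have hS := coarse_scale_gt0; have ha0 := base_gt0; have := pow_Lam_ge1 k.-1.
rewrite /piece_scale => hL; apply: Rdiv_lt_0_compat; first by case: odd.
by apply: pow_lt; nra.
Qed.

Lemma piece_annulus k U x : piece k U -> U x -> annulus k x.
Proof. by case: k => [-> // | k [U0 _ ->] []]. Qed.

Lemma piece_cover x : fin x -> exists2 U, piece (lev x) U & U x.
Proof.
move=> hx; case ex: (lev x) => [| j]; first by exists (annulus 0).
have hg := g_gt0_of_lev_succ ex; have [hx1 _] := d1_weighted hx hx hg hg.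
have [[_ hcov] _] := hCov (piece_scale_gt0 j.+1).
have [U0 [hU0 hU0x]] := hcov x hx1.
by exists (fun y => U0 y /\ annulus j.+1 y); [exists U0 | split].
Qed.

Lemma d1_annulus j x y : annulus j.+1 x -> annulus j.+1 y ->
  d1 x y = Finite (D x y / (g x * g y)).
Proof.
move=> [hx ex] [hy ey].
exact: (d1_weighted hx hy (g_gt0_of_lev_succ ex) (g_gt0_of_lev_succ ey)).2.
Qed.

Lemma rdist_le_of_d1 j x y r : annulus j.+1 x -> annulus j.+1 y ->
  Rbar_le (d1 x y) (Finite r) -> D x y <= r * (Lam * (a0 * Lam ^ j)) ^ 2.
Proof.
move=> hx hy; rewrite (d1_annulus hx hy) /= => hr.
have [[gx1 gx2] [gy1 gy2]] := (lev_succ_bounds hx.2, lev_succ_bounds hy.2).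
rewrite /= in gx2 gy2.
have ha0 := base_gt0; have := pow_Lam_ge1 j => hL.
have hu : 0 < a0 * Lam ^ j by nra.
have hgg : 0 < g x * g y by nra.
have hr0 : 0 <= r.
  apply: Rle_trans _ _ _ _ hr; apply: Rmult_le_pos; first exact: (qm_ge0 hd2).
  exact/Rlt_le/Rinv_0_lt_compat.
have -> : D x y = D x y / (g x * g y) * (g x * g y) by field; lra.
apply: Rle_trans (Rmult_le_compat_r _ _ _ (Rlt_le _ _ hgg) hr) _.
apply: Rmult_le_compat_l => //; rewrite /= Rmult_1_r.
by apply: Rmult_le_compat; lra.
Qed.

Lemma d1_le_of_rdist j x y t : annulus j.+1 x -> annulus j.+1 y -> D x y <= t ->
  Rbar_le (d1 x y) (Finite (t / (a0 * Lam ^ j) ^ 2)).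
Proof.
move=> hx hy ht; rewrite (d1_annulus hx hy) /=.
have [[gx1 _] [gy1 _]] := (lev_succ_bounds hx.2, lev_succ_bounds hy.2).
have ha0 := base_gt0; have := pow_Lam_ge1 j => hL.
have hu : 0 < a0 * Lam ^ j by nra.
have hD := qm_ge0 hd2 x y.
apply: Rle_trans (_ : D x y / (a0 * Lam ^ j) ^ 2 <= _); last first.
  by apply: Rmult_le_compat_r => //; apply/Rlt_le/Rinv_0_lt_compat/pow_lt.
apply: Rmult_le_compat_l => //; apply: Rinv_le_contravar; first exact: pow_lt.
by rewrite /= Rmult_1_r; apply: Rmult_le_compat; lra.
Qed.

Lemma piece_mesh k U x y : piece k U -> U x -> U y ->
  D x y <= if odd k then dl else Dc.
Proof.
have [hS ha0] := (coarse_scale_gt0, base_gt0); have hL := pow_Lam_ge1 2.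
case: k => [-> [hx ex] [hy ey] | j [U0 hU0 ->] [hx0 hx] [hy0 hy]].
  have := g_ball hx hy (g_le_base_of_lev0 ex) (g_le_base_of_lev0 ey).
  have : 0 <= c * S * Lam ^ 2 by apply: Rmult_le_pos; nra.
  rewrite /= /coarse_mesh; lra.
have [_ [hdiam _]] := hCov (piece_scale_gt0 j.+1).
move/diam_leP: (hdiam U0 hU0) => /(_ x y hx0 hy0) /(rdist_le_of_d1 hx hy).
have := pow_Lam_ge1 j => hLj.
have -> : forall t, c * (t / (a0 * Lam ^ j) ^ 2) * (Lam * (a0 * Lam ^ j)) ^ 2
  = c * t * Lam ^ 2.
  by move=> t; field; split; nra.
have : 0 <= K0 * a0 by nra.
by rewrite /fine_mesh /coarse_mesh; case: (odd j.+1) => h; lra.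
Qed.

(* Harnack along [b], [y'], [y], [a] gives [g b <= K0 ^ 3 * g a < Lam * g a]. *)
Lemma no_level_gap_near_piece j Y y y' a b : piece j.+1 Y -> odd j.+1 -> Y y -> Y y' ->
  fin a -> fin b -> D y a <= s -> D y' b <= s -> lev a = j -> lev b = j.+2 -> False.
Proof.
move=> hY hodd hy hy' ha hb hya hyb ea eb.
have [[hy1 ey] [hy1' ey']] := (piece_annulus hY hy, piece_annulus hY hy').
have := piece_mesh hY hy' hy; rewrite hodd => hyy.
have [gy _] := lev_succ_bounds ey; have [gy' _] := lev_succ_bounds ey'.
have [gb _] := lev_succ_bounds eb.
have ga : g a <= a0 * Lam ^ j by apply/lev_le; rewrite ea.
have [hKs hKdl] := base_large; have [_ [_ hL3]] := Lam_ge.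
have ha0 := base_gt0.
have [hLj hLj1] := (pow_Lam_ge1 j, pow_Lam_ge1 j.+1); rewrite /= in gb hLj1.
have hby' : D b y' <= s by rewrite (rdist_sym hd2).
have [gby' _] := g_harnack hb hy1' hby' (ltac:(nra) : K0 * s < g b).
have [gy'y _] := g_harnack hy1' hy1 hyy (ltac:(nra) : K0 * dl < g y').
have [gya _] := g_harnack hy1 ha hya (ltac:(nra) : K0 * s < g y).
have := g_ge0 ha => ga0.
have : g b <= K0 ^ 3 * g a.
  have : K0 * g y' <= K0 * (K0 * g y) by apply: Rmult_le_compat_l; lra.
  have : K0 * (K0 * g y) <= K0 * (K0 * (K0 * g a)) 
    by apply: Rmult_le_compat_l; [lra | apply: Rmult_le_compat_l; lra].
  rewrite /=; lra.
have : K0 ^ 3 * g a <= K0 ^ 3 * (a0 * Lam ^ j).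
  by apply: Rmult_le_compat_l => //; apply: pow_le; lra.
have : K0 ^ 3 * (a0 * Lam ^ j) < Lam * (a0 * Lam ^ j) by apply: Rmult_lt_compat_r; nra.
lra.
Qed.

Lemma lev_near_piece k Y y a : piece k Y -> Y y -> fin a -> D y a <= s ->
  (lev a <= k.+1)%nat /\ (k <= (lev a).+1)%nat.
Proof.
move=> hY hy ha hya; have [hy1 ey] := piece_annulus hY hy.
have [hKs _] := base_large; have hay : D a y <= s by rewrite (rdist_sym hd2).
by rewrite -ey; split; [apply: (lev_le_succ hy1 ha hya) | apply: (lev_le_succ ha hy1 hay)]; lra.
Qed.

Lemma near_odd_piece_lev_eq k Y y1 y2 a1 a2 : piece k Y -> odd k -> Y y1 -> Y y2 ->
  fin a1 -> fin a2 -> D y1 a1 <= s -> D y2 a2 <= s ->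
  ~~ odd (lev a1) -> ~~ odd (lev a2) -> lev a1 = lev a2.
Proof.
move=> hY hk hy1 hy2 ha1 ha2 h1 h2 ev1 ev2.
have := lev_near_piece hY hy1 ha1 h1; have := lev_near_piece hY hy2 ha2 h2.
have ne1 : lev a1 <> k by move=> e; rewrite e hk in ev1.
have ne2 : lev a2 <> k by move=> e; rewrite e hk in ev2.
case: k hk hY hy1 hy2 ne1 ne2 => [// | j] hk hY hy1 hy2 ne1 ne2 b2 b1.
have [e1 | e1] : lev a1 = j \/ lev a1 = j.+2 by lia.
- have [e2 | e2] : lev a2 = j \/ lev a2 = j.+2 by lia.
    by rewrite e1 e2.
  by case: (no_level_gap_near_piece hY hk hy1 hy2 ha1 ha2 h1 h2 e1 e2).
- have [e2 | e2] : lev a2 = j \/ lev a2 = j.+2 by lia.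
    by case: (no_level_gap_near_piece hY hk hy2 hy1 ha2 ha1 h2 h1 e2 e1).
  by rewrite e1 e2.
Qed.

(* The new cover: every fine piece lying near some coarse piece is glued to one of them (its
   [parent], chosen by [epsilon]); fine pieces near no coarse piece are kept alone. *)
Definition coarse (W : X -> Prop) := exists2 k, ~~ odd k & piece k W.
Definition fine (Y : X -> Prop) := exists2 k, odd k & piece k Y.
Definition near (Y : X -> Prop) a := fin a /\ exists2 y, Y y & D y a <= s.
Definition parent_of Y W := exists a, [/\ coarse W, W a & near Y a].
Definition has_parent Y := exists W, parent_of Y W.
Definition parent Y := epsilon (inhabits (fun _ : X => False)) (parent_of Y).

Definition cluster W x := W x \/ exists Y, [/\ fine Y, has_parent Y, parent Y = W & Y x].

Definition new_cover U :=
  (exists2 W, coarse W & U = cluster W) \/ (exists Y, [/\ fine Y, ~ has_parent Y & U = Y]).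

Lemma parent_spec Y : has_parent Y -> parent_of Y (parent Y).
Proof. by move=> [W hW]; apply: epsilon_spec; exists W. Qed.

Lemma coarse_fin W x : coarse W -> W x -> fin x.
Proof. by move=> [k _ hW] /(piece_annulus hW) []. Qed.

Lemma fine_fin Y x : fine Y -> Y x -> fin x.
Proof. by move=> [k _ hY] /(piece_annulus hY) []. Qed.

Lemma coarse_mesh_le W x y : coarse W -> W x -> W y -> D x y <= Dc.
Proof. by move=> [k hk hW] hx hy; move: (piece_mesh hW hx hy); rewrite (negbTE hk). Qed.

Lemma fine_mesh_le Y x y : fine Y -> Y x -> Y y -> D x y <= dl.
Proof. by move=> [k hk hY] hx hy; move: (piece_mesh hY hx hy); rewrite hk. Qed.

Lemma fine_near_parent Y x : fine Y -> has_parent Y -> Y x ->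
  exists2 a, parent Y a & D x a <= rho.
Proof.
move=> hY hp hx; have [a [hW ha [ha1 [y hy hya]]]] := parent_spec hp.
exists a => //; apply: (rdist_quasi_le hd2 (fine_fin hY hx) ha1 (fine_fin hY hy) _ hya).
exact: fine_mesh_le hY hx hy.
Qed.

Lemma child_dist W Y u w : coarse W -> fine Y -> has_parent Y -> parent Y = W ->
  Y u -> W w -> D u w <= K2 ^ 2 * (dl + s + Dc).
Proof.
move=> hW hY hp eW hu hw; have [a ha hua] := fine_near_parent hY hp hu.
rewrite eW in ha.
have [hdl hDc] := (fine_mesh_gt0, coarse_mesh_gt0).
have := rdist_quasi_le hd2 (fine_fin hY hu) (coarse_fin hW hw) (coarse_fin hW ha) hua
  (coarse_mesh_le hW ha hw).
have hK2 := qm_K_ge1 hd2; have : 0 <= (K2 - 1) * K2 * Dc by apply: Rmult_le_pos; nra.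
rewrite /near_rad /=; nra.
Qed.

Lemma cluster_mesh W x y : coarse W -> cluster W x -> cluster W y -> D x y <= mesh s.
Proof.
move=> hW hx hy; have [hdl hDc] := (fine_mesh_gt0, coarse_mesh_gt0).
have hK2 := qm_K_ge1 hd2; rewrite /mesh; set E := dl + s + Dc.
have hE : 0 <= E by rewrite /E; lra.
have hK23 : K2 ^ 2 <= K2 ^ 3 by apply: Rle_pow; [lra | apply/leP].
have hE2 : E <= K2 ^ 2 * E by have := pow_R1_Rle K2 2 hK2; nra.
have hE3 : K2 ^ 2 * E <= K2 ^ 3 * E by nra.
case: hx => [hx | [Y [hY hp eW hx]]]; case: hy => [hy | [Y' [hY' hp' eW' hy]]].
- have : Dc <= E by rewrite /E; lra.
  by have := coarse_mesh_le hW hx hy; lra.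
- by rewrite (rdist_sym hd2); have := child_dist hW hY' hp' eW' hy hx; rewrite -/E; lra.
- by have := child_dist hW hY hp eW hx hy; rewrite -/E; lra.
- have [a ha hxa] := fine_near_parent hY hp hx; rewrite eW in ha.
  have hay : D a y <= K2 ^ 2 * E.
    by rewrite (rdist_sym hd2) /E; apply: child_dist hW hY' hp' eW' hy ha.
  have := rdist_quasi_le hd2 (fine_fin hY hx) (fine_fin hY' hy) (coarse_fin hW ha) hxa hay.
  have : near_rad s <= K2 ^ 2 * E by rewrite /near_rad /E /=; nra.
  have -> : 2 * K2 ^ 3 * E = K2 * (K2 ^ 2 * E + K2 ^ 2 * E) by rewrite /=; ring.
  by move=> hr h; apply: Rle_trans h _; apply: Rmult_le_compat_l; lra.
Qed.

Lemma new_cover_fin U x : new_cover U -> U x -> fin x.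
Proof.
case=> [[W hW ->] [hx | [Y [hY _ _ hx]]] | [Y [hY _ ->]] hx].
- exact: coarse_fin hW hx.
- exact: fine_fin hY hx.
- exact: fine_fin hY hx.
Qed.

Lemma new_cover_cover x : fin x -> exists U, new_cover U /\ U x.
Proof.
move=> hx; have [U hU hUx] := piece_cover hx.
case ho: (odd (lev x)); last first.
  by exists (cluster U); split; [left; exists U => //; exists (lev x); rewrite ?ho | left].
have hY : fine U by exists (lev x).
case: (classic (has_parent U)) => hp; last by exists U; split=> //; right; exists U.
have [a [hW _ _]] := parent_spec hp.
by exists (cluster (parent U)); split; [left; exists (parent U) | right; exists U].
Qed.

Lemma new_cover_mesh U x y : new_cover U -> U x -> U y -> D x y <= mesh s.
Proof.
case=> [[W hW ->] | [Y [hY _ ->]] hx hy]; first exact: cluster_mesh.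
have [hdl hDc] := (fine_mesh_gt0, coarse_mesh_gt0).
have := pow_R1_Rle K2 3 (qm_K_ge1 hd2); have := fine_mesh_le hY hx hy.
by rewrite /mesh; nra.
Qed.

Lemma fine_absorbed Y p v : fine Y -> Y p -> fin v -> D p v <= s -> ~~ odd (lev v) ->
  has_parent Y /\ piece (lev v) (parent Y).
Proof.
move=> hY hp hv hpv hev; have [W hW hWv] := piece_cover hv.
have hpar : has_parent Y.
  by exists W, v; split=> //; [exists (lev v) | split=> //; exists p].
split=> //; have [a [[k hk hWk] ha [ha1 [y hy hya]]]] := parent_spec hpar.
have [_ ea] := piece_annulus hWk ha; case: hY => [k' hk' hYk'].
have eav : lev a = lev v.
  by apply: near_odd_piece_lev_eq hYk' hk' hy hp ha1 hv hya hpv _ hev; rewrite ea.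
by rewrite -eav ea.
Qed.

Section Multiplicity.
Variable V : X -> Prop.
Hypothesis V_fin : forall x, V x -> fin x.
Hypothesis V_diam : forall x y, V x -> V y -> D x y <= s.

Local Notation meets U := (exists x, U x /\ V x).

Lemma V_lev_eq x y : V x -> V y -> odd (lev x) = odd (lev y) -> lev x = lev y.
Proof.
move=> hx hy ho; have [hKs _] := base_large.
have := lev_le_succ (V_fin hx) (V_fin hy) (V_diam hx hy) (Rlt_le _ _ hKs).
have := lev_le_succ (V_fin hy) (V_fin hx) (V_diam hy hx) (Rlt_le _ _ hKs).
move=> h1 h2; have [e | [e | //]] : lev y = (lev x).+1 \/ lev x = (lev y).+1 \/ lev x = lev y
  by lia.
- by move: ho; rewrite e /=; case: odd.
- by move: ho; rewrite e /=; case: odd.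
Qed.

Lemma meeting_even_cluster v0 U : V v0 -> ~~ odd (lev v0) -> new_cover U -> meets U ->
  exists2 W, piece (lev v0) W &
    U = cluster W /\ exists2 z, W z & exists2 v, V v & D z v <= rho.
Proof.
move=> hv0 hev0 [[W [k hk hW] ->] | [Y [hY hnp ->]]] [x [hx hVx]].
- case: hx => [hx | [Y [hY hp eW hx]]].
  + have [hx1 ex] := piece_annulus hW hx.
    have ek : k = lev v0 by rewrite -ex; apply: V_lev_eq => //; rewrite ex (negbTE hk) (negbTE hev0).
    rewrite ek in hW; exists W => //; split=> //; exists x => //; exists x => //.
    by rewrite (rdist_diag hd2); have := near_rad_gt0; lra.
  + have [_] := fine_absorbed hY hx (V_fin hv0) (V_diam hVx hv0) hev0; rewrite eW => hW'.
    exists W => //; split=> //; have [a ha hxa] := fine_near_parent hY hp hx.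
    by rewrite eW in ha; exists a => //; exists x => //; rewrite (rdist_sym hd2).
- by case: hnp; case: (fine_absorbed hY hx (V_fin hv0) (V_diam hVx hv0) hev0).
Qed.

Lemma new_cover_mult_even v0 : V v0 -> ~~ odd (lev v0) ->
  at_most n.+1 (fun U => new_cover U /\ meets U).
Proof.
move=> hv0 hev0; case ev0: (lev v0) => [| j].
  apply: (at_most_one (U0 := cluster (annulus 0))) => U [hU hmeet].
  by have [W hW [-> _]] := meeting_even_cluster hv0 hev0 hU hmeet; rewrite ev0 in hW; rewrite hW.
rewrite ev0 in hev0.
pose Z z := annulus j.+1 z /\ exists2 v, V v & D z v <= rho.
apply: (at_most_image (G := fun U0 => Cov (piece_scale j.+1) U0 /\ exists z, U0 z /\ Z z)
                      (phi := fun U0 => cluster (fun x => U0 x /\ annulus j.+1 x))).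
  move=> U [hU hmeet]; have [W] := meeting_even_cluster hv0 (ltac:(by rewrite ev0)) hU hmeet.
  by rewrite ev0 => -[U0 hU0 ->] [-> [z [hz hzj] hzV]]; exists U0 => //; split=> //; exists z.
have [_ [_ hmult]] := hCov (piece_scale_gt0 j.+1); apply: hmult; apply/diam_leP.
move=> z z' [hz [v hv hzv]] [hz' [v' hv' hzv']].
rewrite /piece_scale (negbTE hev0) /=; apply: d1_le_of_rdist => //.
have [hz1 hz1'] := (hz.1, hz'.1); have hrho := near_rad_gt0.
have hvz' : D v z' <= K2 * (s + rho).
  apply: (rdist_quasi_le hd2 (V_fin hv) hz1' (V_fin hv') (V_diam hv hv')).
  by rewrite (rdist_sym hd2).
have := rdist_quasi_le hd2 hz1 hz1' (V_fin hv) hzv hvz'.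
have hK2 := qm_K_ge1 hd2; have hKr : 0 <= K2 * rho by nra.
have : K2 * rho <= K2 ^ 2 * rho by rewrite /=; nra.
rewrite /coarse_scale; lra.
Qed.

Lemma new_cover_mult_odd x0 : V x0 -> (forall x, V x -> odd (lev x)) ->
  at_most n.+1 (fun U => new_cover U /\ meets U).
Proof.
move=> hx0 hodd; have lev_V x : V x -> lev x = lev x0.
  by move=> hx; apply: V_lev_eq => //; rewrite !hodd.
have := hodd x0 hx0; case e0: (lev x0) => [// | j] hj.
pose phi U0 := let Y := fun x => U0 x /\ annulus j.+1 x in
  if Defs.decP (has_parent Y) then cluster (parent Y) else Y.
apply: (at_most_image (G := fun U0 => Cov (piece_scale j.+1) U0 /\ meets U0) (phi := phi)).
  move=> U [[[W [k hk hW] ->] | [Y [[k hk hY] hnp ->]]] [x [hx hVx]]].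
  - case: hx => [hx | [Y [[k' hk' hY] hp eW hx]]].
      have [_ ex] := piece_annulus hW hx; move: hk.
      by rewrite -ex lev_V // e0 hj.
    have [_ ex] := piece_annulus hY hx; rewrite lev_V // e0 in ex; subst k'.
    case: hY => U0 hU0 eY; exists U0; first by split=> //; exists x; rewrite eY in hx; case: hx.
    by rewrite /phi -eY decP_true // eW.
  - have [_ ex] := piece_annulus hY hx; rewrite lev_V // e0 in ex; subst k.
    case: hY => U0 hU0 eY; exists U0; first by split=> //; exists x; rewrite eY in hx; case: hx.
    by rewrite /phi -eY decP_false.
have [_ [_ hmult]] := hCov (piece_scale_gt0 j.+1); apply: hmult; apply/diam_leP.
have annV x : V x -> annulus j.+1 x by move=> hx; split; [apply: V_fin | rewrite lev_V].
move=> x y hx hy; rewrite /piece_scale hj /=.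
exact: d1_le_of_rdist (annV x hx) (annV y hy) (V_diam hx hy).
Qed.

End Multiplicity.

Lemma new_cover_mult V : Rbar_le (diam d2 V) (Finite s) ->
  at_most n.+1 (fun U => new_cover U /\ exists x, U x /\ V x).
Proof.
move=> hV; pose V' x := V x /\ fin x.
apply: (at_most_image (G := fun U => new_cover U /\ exists x, U x /\ V' x) (phi := fun W => W)).
  move=> U [hU [x [hx hVx]]]; exists U => //; split=> //.
  by exists x; split=> //; split=> //; apply: new_cover_fin hU hx.
have V'_fin x : V' x -> fin x by case.
have V'_diam x y : V' x -> V' y -> D x y <= s.
  move=> [hx hx1] [hy hy1]; move/diam_leP: hV => /(_ x y hx hy).
  by rewrite (qm_finite hd2 hx1 hy1).
case: (classic (exists x, V' x)) => [[x0 hx0] | hne]; last first.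
  by apply: at_most_none => U [_ [x [_ hx]]]; apply: hne; exists x.
case: (classic (exists2 v, V' v & ~~ odd (lev v))) => [[v hv hev] | hno].
  exact (new_cover_mult_even V'_fin V'_diam hv hev).
apply: (new_cover_mult_odd V'_fin V'_diam hx0) => x hx.
by case: (boolP (odd (lev x))) => // hev; case: hno; exists x.
Qed.

Lemma new_cover_nagata : cover_of_finite_part d2 new_cover /\
  bounded_cover d2 (mesh s) new_cover /\ s_multiplicity_le d2 s n.+1 new_cover.
Proof.
split; [split | split].
- by move=> U hU x hx; apply: new_cover_fin hU hx.
- exact: new_cover_cover.
- move=> U hU; apply/diam_leP => x y hx hy.
  rewrite (qm_finite hd2 (new_cover_fin hU hx) (new_cover_fin hU hy)).
  exact: new_cover_mesh hU hx hy.
- by move=> V; apply: new_cover_mult.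
Qed.

End Scale.

Lemma nagata_witness_of_covers : nagata_witness d2 n.
Proof.
have [hdl hDc] := (fine_mesh_gt0 Rlt_0_1, coarse_mesh_gt0 Rlt_0_1).
have hK2 : 0 < K2 ^ 3 by apply: pow_lt; have := qm_K_ge1 hd2; lra.
exists (mesh 1); split; first by rewrite /mesh; nra.
by move=> s hs; exists (new_cover hs); rewrite -mesh_linear; apply: new_cover_nagata.
Qed.

End Construction.

Lemma nagata_witness_weighted n : nagata_witness d1 n -> nagata_witness d2 n.
Proof.
move=> [c [hc hW]].
pose P (sg : R) (B : (X -> Prop) -> Prop) := 0 < sg -> cover_of_finite_part d1 B /\ bounded_cover d1 (c * sg) B /\
  s_multiplicity_le d1 sg n.+1 B.
have inh : inhabited ((X -> Prop) -> Prop) := inhabits (fun _ => False).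
apply: (@nagata_witness_of_covers n c (fun sg => epsilon inh (P sg)) hc) => sg hsg.
have [B hB] := hW sg hsg.
by apply: (epsilon_spec inh (P sg)) => //; exists B.
Qed.

End Weighted.

(** * The involution *)

(* With [a, b, c] the distances of [x, y, z] to [o] and [u, v, w] those of the pairs [xy], [xz],
   [zy]: a four-point consequence of the quasi-triangle inequality. *)
Lemma quasi_four_point K a b c u v w : 1 <= K -> 0 < a -> 0 < b -> 0 <= c ->
  0 <= u -> 0 <= v -> 0 <= w ->
  u <= K * Rmax v w -> c <= K * Rmax a v -> c <= K * Rmax b w -> u <= K * Rmax a b ->
  u * c <= K * K * Rmax (v * b) (w * a).
Proof.
move=> hK ha hb hc hu hv hw.
wlog hab : a b v w ha hb hv hw / a <= b.
  move=> H huvw hcav hcbw huab; case: (Rle_or_lt a b) => hab; first exact: H.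
  by rewrite Rmax_comm; apply: H; rewrite // 1?Rmax_comm //; lra.
move=> huvw hcav hcbw; rewrite Rmax_right // => hub.
have [hvb hwa] := (Rmax_l (v * b) (w * a), Rmax_r (v * b) (w * a)).
have hKK : 0 <= K * K by nra.
have [[e1 hva] | [e1 hav]] := Rmax_cases a v; rewrite e1 in hcav.
- have [[e2 hwv] | [e2 hvw]] := Rmax_cases v w; rewrite e2 in huvw.
  + have : u * c <= (K * v) * (K * b) by apply: Rmult_le_compat; nra.
    have : K * K * (v * b) <= K * K * Rmax (v * b) (w * a) by apply: Rmult_le_compat_l.
    lra.
  + have : u * c <= (K * w) * (K * a) by apply: Rmult_le_compat; nra.
    have : K * K * (w * a) <= K * K * Rmax (v * b) (w * a) by apply: Rmult_le_compat_l.
    lra.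
- have : u * c <= (K * b) * (K * v) by apply: Rmult_le_compat; nra.
  have : K * K * (v * b) <= K * K * Rmax (v * b) (w * a) by apply: Rmult_le_compat_l.
  lra.
Qed.

Lemma Rmax_div p q r : 0 < r -> Rmax (p / r) (q / r) = Rmax p q / r.
Proof. by move=> hr; rewrite /Rdiv Rmax_mult //; apply/Rlt_le/Rinv_0_lt_compat. Qed.

Lemma quasi_div_weights K a b c u v w : 0 <= K -> 0 < a -> 0 < b -> 0 < c ->
  u * c <= K * Rmax (v * b) (w * a) -> u / (a * b) <= K * Rmax (v / (a * c)) (w / (c * b)).
Proof.
move=> hK ha hb hc h; have habc : 0 < a * b * c by apply: Rmult_lt_0_compat => //; nra.
rewrite (_ : v / (a * c) = v * b / (a * b * c)); last by field; lra.
rewrite (_ : w / (c * b) = w * a / (a * b * c)); last by field; lra.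
rewrite (_ : u / (a * b) = u * c / (a * b * c)); last by field; lra.
rewrite Rmax_div // /Rdiv -Rmult_assoc.
by apply: Rmult_le_compat_r => //; apply/Rlt_le/Rinv_0_lt_compat.
Qed.

Lemma le_Kmax_KKmax K a b c : 1 <= K -> 0 <= b -> a <= K * Rmax b c -> a <= K * K * Rmax b c.
Proof.
move=> hK hb; have hm : 0 <= Rmax b c by have := Rmax_l b c; lra.
have : 0 <= K * Rmax b c by nra.
nra.
Qed.

Lemma Rinv_ge0 r : 0 <= r -> 0 <= / r.
Proof.
case/Rle_lt_or_eq_dec => [hr | <-]; last by rewrite Rinv_0; lra.
exact/Rlt_le/Rinv_0_lt_compat.
Qed.

Lemma Rinv_le_K K a b : 0 < a -> 0 < b -> b <= K * a -> / a <= K * / b.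
Proof.
move=> ha hb h; rewrite (_ : / a = b / (a * b)); last by field; lra.
rewrite (_ : K * / b = K * a / (a * b)); last by field; lra.
by apply: Rmult_le_compat_r => //; apply/Rlt_le/Rinv_0_lt_compat; nra.
Qed.

Lemma divR_finite (a b : R) : b <> 0 -> divR a b = Finite (a / b).
Proof. by move=> hb; rewrite /divR decP_false. Qed.

Lemma divR_zero (a : R) : divR a 0 = p_infty.
Proof. by rewrite /divR decP_true. Qed.

Section Involution.
Variables (X : Type) (d : X -> X -> Rbar) (K : R) (o : X).
Hypotheses (hd : qmetric d K) (ho : finite_pt d o).

Local Notation D := (rdist d).
Local Notation e := (fpart d).
Local Notation rho := (involution d o).

Lemma fpart_finite p q : finite_pt d p -> finite_pt d q -> e p q = D p q.
Proof. by move=> hp hq; rewrite /fpart /infpair decP_false //; case=> _ []. Qed.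

Lemma fpart_inf p q : p <> q -> is_inf d p \/ is_inf d q -> e p q = 1.
Proof. by move=> hpq hinf; rewrite /fpart /infpair decP_true. Qed.

Lemma fpart_sym p q : e p q = e q p.
Proof.
case: (classic (is_inf d p \/ is_inf d q)) => h.
- case: (classic (p = q)) => [-> // | hpq].
  by rewrite (fpart_inf hpq h) (fpart_inf (nesym hpq)) //; case: h; [right | left].
- by rewrite !fpart_finite ?(rdist_sym hd p q) //; tauto.
Qed.

Lemma fpart_gt0 p q : p <> q -> 0 < e p q.
Proof.
move=> hpq; case: (classic (is_inf d p \/ is_inf d q)) => h; first by rewrite fpart_inf //; lra.
have [hp hq] : finite_pt d p /\ finite_pt d q by split=> hinf; apply: h; [left | right].
by rewrite fpart_finite //; apply: (rdist_gt0 hd).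
Qed.

Lemma involution_diag x : rho x x = Finite 0.
Proof. by rewrite /involution decP_true. Qed.

Lemma involution_o_r x : x <> o -> rho x o = p_infty.
Proof.
move=> hx; rewrite /involution decP_false //.
case: (classic (is_inf d x)) => hinf; first by rewrite decP_true // (qm_diag hd) divR_zero.
by rewrite decP_false // decP_false // (qm_diag hd) /= Rmult_0_r divR_zero.
Qed.

Lemma involution_o_l y : y <> o -> rho o y = p_infty.
Proof.
move=> hy; rewrite /involution decP_false 1?decP_false //; last by congruence.
case: (classic (is_inf d y)) => hinf; first by rewrite decP_true // (qm_diag hd) divR_zero.
by rewrite decP_false // (qm_diag hd) /= Rmult_0_l divR_zero.
Qed.

(* [fpart d p q = 1] when [p] or [q] is the point at infinity, so this single formula covers all
   pairs of points other than [o]. *)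
Lemma involution_fpart x y : x <> y -> x <> o -> y <> o ->
  rho x y = Finite (e x y / (e x o * e y o)).
Proof.
move=> hxy hxo hyo; rewrite /involution decP_false //.
have hxo' := fpart_gt0 hxo; have hyo' := fpart_gt0 hyo.
case: (classic (is_inf d x)) => hx.
  have hy := finite_pt_of_inf hd hx (nesym hxy).
  rewrite decP_true // -/(rdist d o y) (rdist_sym hd) -(fpart_finite hy ho).
  rewrite (fpart_inf hxy (or_introl hx)) (fpart_inf hxo (or_introl hx)).
  by rewrite divR_finite; [f_equal; field | ]; lra.
case: (classic (is_inf d y)) => hy.
  have hx' := finite_pt_of_inf hd hy hxy.
  rewrite decP_false // decP_true // -/(rdist d x o) -(fpart_finite hx ho).
  rewrite (fpart_inf hxy (or_intror hy)) (fpart_inf hyo (or_introl hy)).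
  by rewrite divR_finite; [f_equal; field | ]; lra.
rewrite decP_false // decP_false // -/(rdist d x y) -/(rdist d x o) -/(rdist d o y).
by rewrite (rdist_sym hd o y) -!fpart_finite // divR_finite //; nra.
Qed.

Lemma involution_sym x y : rho x y = rho y x.
Proof.
case: (classic (x = y)) => [-> // | hxy].
case: (classic (x = o)) => [exo | hxo].
  by subst x; have hyo := nesym hxy; rewrite involution_o_l // involution_o_r.
case: (classic (y = o)) => [eyo | hyo].
  by subst y; rewrite involution_o_l // involution_o_r.
rewrite !involution_fpart //; last exact: nesym.
by rewrite (fpart_sym y x) (Rmult_comm (e y o)).
Qed.

Lemma is_inf_involution x : at_least_three_points X -> is_inf rho x <-> x = o.
Proof.
move=> h3; split=> [hx | -> y hy]; last exact: involution_o_r.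
apply: NNPP => hxo; have [y [hyx hyo]] := exists_neq2 h3 x o.
by move: (hx y hyx); rewrite involution_fpart.
Qed.

Lemma rdist_involution x y : x <> y -> x <> o -> y <> o ->
  rdist rho x y = e x y / (e x o * e y o).
Proof. by move=> hxy hxo hyo; rewrite /rdist involution_fpart. Qed.

Lemma rdist_involution_gt0 x y : x <> y -> x <> o -> y <> o -> 0 < rdist rho x y.
Proof.
move=> hxy hxo hyo; rewrite rdist_involution //.
have := fpart_gt0 hxy; have := fpart_gt0 hxo; have := fpart_gt0 hyo => *.
by apply: Rdiv_lt_0_compat => //; apply: Rmult_lt_0_compat.
Qed.

Lemma rdist_involution_ge0 x y : 0 <= rdist rho x y.
Proof.
case: (classic (x = y)) => [-> | hxy]; first by rewrite /rdist involution_diag /=; lra.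
case: (classic (x = o)) => [exo | hxo].
  by subst x; rewrite /rdist involution_o_l /=; [lra | apply: nesym].
case: (classic (y = o)) => [-> | hyo]; first by rewrite /rdist involution_o_r //=; lra.
exact/Rlt_le/rdist_involution_gt0.
Qed.

Lemma fpart_four_point x y z : x <> y -> y <> z -> x <> z -> x <> o -> y <> o -> z <> o ->
  e x y * e z o <= K * K * Rmax (e x z * e y o) (e z y * e x o).
Proof.
move=> hxy hyz hxz hxo hyo hzo; have hK := qm_K_ge1 hd.
have quasi := qm_quasi hd; have ge0 := qm_ge0 hd.
case: (classic (is_inf d z)) => hz.
  have [hx hy] := (finite_pt_of_inf hd hz hxz, finite_pt_of_inf hd hz hyz).
  rewrite (fpart_inf hzo (or_introl hz)) (fpart_inf hxz (or_intror hz)).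
  rewrite (fpart_inf (nesym hyz) (or_introl hz)).
  rewrite !Rmult_1_l !Rmult_1_r Rmax_comm !fpart_finite //.
  by apply: le_Kmax_KKmax => //; rewrite -(rdist_sym hd o y); apply: quasi.
case: (classic (is_inf d x)) => hx.
  have hy := finite_pt_of_inf hd hx (nesym hxy).
  rewrite (fpart_inf hxy (or_introl hx)) (fpart_inf hxz (or_introl hx)).
  rewrite (fpart_inf hxo (or_introl hx)).
  rewrite !Rmult_1_l !Rmult_1_r !fpart_finite // Rmax_comm.
  by apply: le_Kmax_KKmax => //; apply: quasi.
case: (classic (is_inf d y)) => hy.
  rewrite (fpart_inf hxy (or_intror hy)) (fpart_inf (nesym hyz) (or_intror hy)).
  rewrite (fpart_inf hyo (or_introl hy)).
  rewrite !Rmult_1_l !Rmult_1_r !fpart_finite // (rdist_sym hd x z).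
  by apply: le_Kmax_KKmax => //; apply: quasi.
have [hxo' hyo'] : 0 < D x o /\ 0 < D y o by split; apply: (rdist_gt0 hd).
rewrite !fpart_finite //; apply: quasi_four_point => //.
- exact: quasi.
- by rewrite (rdist_sym hd x z) Rmax_comm; apply: quasi.
- by rewrite Rmax_comm; apply: quasi.
- by rewrite -(rdist_sym hd o y); apply: quasi.
Qed.

Lemma qmetric_involution : at_least_three_points X -> qmetric rho (K * K).
Proof.
move=> h3; have hK := qm_K_ge1 hd.
have finE x : finite_pt rho x <-> x <> o by rewrite /finite_pt is_inf_involution.
constructor.
- nra.
- exact: involution_sym.
- move=> x y /finE hx /finE hy; case: (classic (x = y)) => [-> | hxy].
    by rewrite /rdist involution_diag.
  by rewrite /rdist involution_fpart.
- exact: rdist_involution_ge0.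
- move=> x y /finE hx /finE hy e0; apply: NNPP => hxy.
  by have := rdist_involution_gt0 hxy hx hy; lra.
- exact: involution_diag.
- move=> x y z /finE hx /finE hy /finE hz.
  have R0 u : rdist rho u u = 0 by rewrite /rdist involution_diag.
  have le_max a b : 0 <= a -> 0 <= b -> a <= K * K * Rmax a b /\ b <= K * K * Rmax a b.
    move=> ha hb; have := Rmax_l a b; have := Rmax_r a b => h1 h2.
    by split; apply: le_Kmax_KKmax => //; nra.
  have nn := rdist_involution_ge0; have le0 := Rle_refl 0.
  case: (classic (x = y)) => [<- | hxy].
    by rewrite R0; apply: Rle_trans (nn x z) (proj1 (le_max _ _ (nn x z) (nn z x))).
  case: (classic (z = x)) => [-> | hzx]; first by rewrite R0; apply: (le_max _ _ le0 (nn x y)).2.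
  case: (classic (z = y)) => [-> | hzy]; first by rewrite R0; apply: (le_max _ _ (nn x y) le0).1.
  have hxz := nesym hzx; rewrite !rdist_involution //.
  apply: quasi_div_weights; try exact: fpart_gt0; first nra.
  by apply: fpart_four_point => //; apply: nesym.
- by move=> x y /is_inf_involution -> // /is_inf_involution ->.
Qed.

Lemma finite_pt_of_Rinv_gt0 x : x <> o -> 0 < / D x o -> finite_pt d x.
Proof.
move=> hxo h hinf; move: h.
by rewrite (rdist_sym hd) (rdist_inf hinf (nesym hxo)) Rinv_0; lra.
Qed.

Lemma involution_harnack t x y : x <> o -> y <> o -> rdist rho x y <= t ->
  K * t < / D x o -> / D x o <= K * / D y o /\ / D y o <= K * / D x o.
Proof.
move=> hxo hyo hR ht; have hK := qm_K_ge1 hd; have hR0 := rdist_involution_ge0 x y.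
have hKt : t <= K * t by nra.
have hx := finite_pt_of_Rinv_gt0 hxo (ltac:(nra)).
have ha := rdist_gt0 hd hx ho hxo; have hia := Rinv_0_lt_compat _ ha.
case: (classic (x = y)) => [<- | hxy]; first by split; nra.
case: (classic (is_inf d y)) => hy.
  move: hR; rewrite rdist_involution // (fpart_inf hxy (or_intror hy)).
  rewrite (fpart_inf hyo (or_introl hy)) (fpart_finite hx ho).
  by rewrite Rmult_1_r /Rdiv Rmult_1_l; lra.
have hb := rdist_gt0 hd hy ho hyo.
move: hR; rewrite rdist_involution // !fpart_finite // => hR.
have hKxy : K * D x y < D y o.
  have e1 : K * D x y = K * (D x y / (D x o * D y o)) * (D x o * D y o) by field; lra.
  have e2 : D y o = / D x o * (D x o * D y o) by field; lra.
  by rewrite e1 [X in _ < X]e2; apply: Rmult_lt_compat_r; nra.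
have hyx : D y x <= D x y by rewrite (rdist_sym hd); lra.
have [h1 h2] := rdist_harnack hd ho hy hx hyx hKxy.
by split; apply: Rinv_le_K.
Qed.

Lemma involution_ball a x y : x <> o -> y <> o -> / D x o <= a -> / D y o <= a ->
  rdist rho x y <= K * a.
Proof.
move=> hxo hyo hxa hya; have hK := qm_K_ge1 hd.
have ha0 : 0 <= a by have := Rinv_ge0 (qm_ge0 hd x o); lra.
case: (classic (x = y)) => [<- | hxy]; first by rewrite /rdist involution_diag /=; nra.
case: (classic (is_inf d x)) => hx.
  have hy := finite_pt_of_inf hd hx (nesym hxy).
  rewrite rdist_involution // (fpart_inf hxy (or_introl hx)) (fpart_inf hxo (or_introl hx)).
  rewrite (fpart_finite hy ho).
  by rewrite /Rdiv !Rmult_1_l; nra.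
case: (classic (is_inf d y)) => hy.
  rewrite rdist_involution // (fpart_inf hxy (or_intror hy)) (fpart_inf hyo (or_introl hy)).
  rewrite (fpart_finite hx ho).
  by rewrite /Rdiv Rmult_1_r Rmult_1_l; nra.
have [ha hb] := (rdist_gt0 hd hx ho hxo, rdist_gt0 hd hy ho hyo).
rewrite rdist_involution // !fpart_finite //.
have q : D x y <= K * Rmax (D x o) (D y o).
  by rewrite -(rdist_sym hd o y); apply: (qm_quasi hd).
apply: Rle_trans (_ : K * Rmax (D x o) (D y o) / (D x o * D y o) <= _).
  by apply: Rmult_le_compat_r => //; apply/Rlt_le/Rinv_0_lt_compat; nra.
have [[-> _] | [-> _]] := Rmax_cases (D x o) (D y o).
- rewrite (_ : K * D x o / (D x o * D y o) = K * / D y o); last by field; lra.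
  by apply: Rmult_le_compat_l; lra.
- rewrite (_ : K * D y o / (D x o * D y o) = K * / D x o); last by field; lra.
  by apply: Rmult_le_compat_l; lra.
Qed.

Lemma nagata_witness_involution n : at_least_three_points X ->
  nagata_witness d n <-> nagata_witness rho n.
Proof.
move=> h3; have hK := qm_K_ge1 hd.
have finE x : finite_pt rho x <-> x <> o by rewrite /finite_pt is_inf_involution.
split.
- (* At the point at infinity of [d], [D x o = 0] and [/ 0 = 0]: it falls in the central ball. *)
  apply: (nagata_witness_weighted (g := fun x => / D x o) (qmetric_involution h3) hK).
  + by move=> x _; apply/Rinv_ge0/(qm_ge0 hd).
  + move=> x y /finE hxo /finE hyo gx gy.
    have [hx hy] := (finite_pt_of_Rinv_gt0 hxo gx, finite_pt_of_Rinv_gt0 hyo gy).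
    split=> //; rewrite (qm_finite hd hx hy); f_equal.
    case: (classic (x = y)) => [<- | hxy].
      by rewrite /rdist involution_diag (qm_diag hd) /= /Rdiv Rmult_0_l.
    have [ha hb] := (rdist_gt0 hd hx ho hxo, rdist_gt0 hd hy ho hyo).
    by rewrite rdist_involution // !fpart_finite //; field; lra.
  + by move=> t x y /finE hxo /finE hyo; apply: involution_harnack.
  + by move=> a x y /finE hxo /finE hyo; apply: involution_ball.
- apply: (nagata_witness_weighted (g := fun x => D x o) hd hK).
  + by move=> x _; apply: (qm_ge0 hd).
  + move=> x y hx hy gx gy.
    have hxo : x <> o by move=> e; move: gx; rewrite e (rdist_diag hd); lra.
    have hyo : y <> o by move=> e; move: gy; rewrite e (rdist_diag hd); lra.
    split; first exact/finE.
    case: (classic (x = y)) => [<- | hxy].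
      by rewrite involution_diag /rdist (qm_diag hd) /= /Rdiv Rmult_0_l.
    by rewrite involution_fpart // !fpart_finite.
  + by move=> t x y hx hy; apply: (rdist_harnack hd ho).
  + by move=> a x y hx hy; apply: (rdist_ball hd ho).
Qed.

End Involution.

Lemma dimN_involution (X : Type) (d : X -> X -> Rbar) (K : R) (o : X) :
  at_least_three_points X -> qmetric d K -> finite_pt d o -> dimN d = dimN (involution d o).
Proof. by move=> h3 hd ho; apply: dimN_ext => n; apply: (nagata_witness_involution hd ho). Qed.

(** * Quasi-metrics inducing the same Moebius structure *)

Lemma mkquad_inord (X : Type) (a b c e : X) :
  [/\ mkquad a b c e (inord 0) = a, mkquad a b c e (inord 1) = b,
      mkquad a b c e (inord 2) = c & mkquad a b c e (inord 3) = e].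
Proof.
have vE k : (k < 4)%nat -> val (inord k : 'I_4) = k by move=> hk; apply: inordK.
by split; rewrite /mkquad vE.
Qed.

Lemma mkquad_inj (X : Type) (a b c e : X) : a <> b -> a <> c -> a <> e -> b <> c -> b <> e ->
  c <> e -> injective (mkquad a b c e).
Proof.
move=> hab hac hae hbc hbe hce [[|[|[|[|i]]]] hi] [[|[|[|[|j]]]] hj] //= h;
  try (by apply: val_inj); by move: h; rewrite /mkquad /=; congruence.
Qed.

Lemma admissible_of_inj (X : Type) (n : nat) (P : 'I_n -> X) : injective P -> admissible P.
Proof. by move=> hP i j k hij _ _ [/hP]. Qed.

Section CrossRatio.
Variables (X : Type) (d : X -> X -> Rbar) (K : R) (o : X).
Hypotheses (hd : qmetric d K) (ho : finite_pt d o).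

Local Notation e := (fpart d).
Local Notation inf_count u := (nat_of_bool (Defs.decP (is_inf d u))).

Lemma ninfE u v : u <> v -> ninf d u v = (inf_count u + inf_count v)%nat.
Proof.
move=> huv; rewrite /ninf /infpair.
case: (classic (is_inf d u)) => hu; case: (classic (is_inf d v)) => hv.
- by case: huv; apply: (qm_inf_uniq hd).
- by rewrite (decP_true hu) (decP_false hv) decP_true //; split=> //; left.
- by rewrite (decP_false hu) (decP_true hv) decP_true //; split=> //; right.
- by rewrite (decP_false hu) (decP_false hv) decP_false //; case=> _ [].
Qed.

(* As [o] is finite, each pairing of [o, x, y, z] contains as many points at infinity as
   [x, y, z] do, so no coordinate of the cross-ratio triple is cancelled. *)
Lemma crt_d_mkquad x y z : x <> y -> y <> z -> x <> z -> x <> o -> y <> o -> z <> o ->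
  crt_d d (mkquad o x y z) = (e o x * e y z, e o y * e z x, e o z * e x y).
Proof.
move=> hxy hyz hxz hxo hyo hzo; rewrite /crt_d /crt_prod.
have [-> -> -> ->] := mkquad_inord o x y z.
rewrite /= !ninfE ?(decP_false ho) //; try congruence.
have -> : (inf_count y + (inf_count z + inf_count x) = inf_count x + (inf_count y + inf_count z))%nat
  by lia.
have -> : (inf_count z + (inf_count x + inf_count y) = inf_count x + (inf_count y + inf_count z))%nat
  by lia.
by rewrite !maxnn eqxx.
Qed.

Lemma crt_d_involution x y z : x <> y -> y <> z -> x <> z -> x <> o -> y <> o -> z <> o ->
  exists2 mu, 0 < mu & crt_d d (mkquad o x y z) =
    (mu * rdist (involution d o) y z, mu * rdist (involution d o) z x,
     mu * rdist (involution d o) x y).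
Proof.
move=> hxy hyz hxz hxo hyo hzo; rewrite crt_d_mkquad //.
have a := fpart_gt0 hd hxo; have b := fpart_gt0 hd hyo; have c := fpart_gt0 hd hzo.
exists (e x o * e y o * e z o); first by apply: Rmult_lt_0_compat; nra.
rewrite !(rdist_involution hd ho) //; try congruence.
by rewrite !(fpart_sym hd o); f_equal; [f_equal | ]; field; lra.
Qed.

End CrossRatio.

Lemma Phibar_pos a b c : 0 < a -> 0 < b -> 0 < c ->
  Phibar (a, b, c) = (Finite (ln (b / c)), Finite (ln (c / a)), Finite (ln (a / b))).
Proof. by move=> ha hb hc; rewrite /Phibar /= decP_true. Qed.

Lemma Phibar_scale mu a b c : 0 < mu -> 0 < a -> 0 < b -> 0 < c ->
  Phibar (mu * a, mu * b, mu * c) = Phibar (a, b, c).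
Proof.
move=> hmu ha hb hc; rewrite !Phibar_pos //; try exact: Rmult_lt_0_compat.
have q u v : 0 < v -> mu * u / (mu * v) = u / v by move=> hv; field; lra.
by rewrite !q.
Qed.

Lemma div_cross u v u' v' : 0 < v -> 0 < v' -> 0 < u' -> u / v = u' / v' -> u / u' = v / v'.
Proof.
move=> hv hv' hu' e; rewrite (_ : u = u / v * v); last by field; lra.
by rewrite e; field; lra.
Qed.

Lemma Phibar_pos_inj a b c a' b' c' : 0 < a -> 0 < b -> 0 < c -> 0 < a' -> 0 < b' -> 0 < c' ->
  Phibar (a, b, c) = Phibar (a', b', c') -> b / b' = c / c' /\ a / a' = c / c'.
Proof.
move=> ha hb hc ha' hb' hc'; rewrite !Phibar_pos // => -[e1 e2 _].
have /ln_inv e1' := e1; have /ln_inv e2' := e2.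
split; first by apply: div_cross => //; apply: e1'; apply: Rdiv_lt_0_compat.
by symmetry; apply: div_cross => //; apply: e2'; apply: Rdiv_lt_0_compat.
Qed.

Lemma const_on_pairs (T : Type) (P : T -> Prop) (L : T -> T -> R) :
  (forall u v, L u v = L v u) ->
  (forall x y z, P x -> P y -> P z -> x <> y -> y <> z -> x <> z -> L y z = L x y) ->
  forall a b u v, P a -> P b -> P u -> P v -> a <> b -> u <> v -> L u v = L a b.
Proof.
move=> Lsym Ltri a b u v ha hb hu hv hab huv.
have common p q r : P p -> P q -> P r -> p <> q -> p <> r -> L p q = L p r.
  move=> hp hq hr hpq hpr; case: (classic (q = r)) => [-> // | hqr].
  by rewrite (Lsym p q); symmetry; apply: Ltri => //; apply: nesym.
case: (classic (u = a)) => [eua | hua].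
  by subst u; case: (classic (v = b)) => [-> // | hvb]; apply: common.
by rewrite (common u v a) // (Lsym u a); apply: common => //; apply: nesym.
Qed.

Section InducedMetrics.
Variables (X : Type) (d d' : X -> X -> Rbar) (K K' : R) (M : quad X -> Rbar * Rbar * Rbar).
Hypotheses (h3 : at_least_three_points X) (hd : qmetric d K) (hd' : qmetric d' K').
Hypotheses (hM : induces d M) (hM' : induces d' M).

Lemma common_finite_pt : exists o, finite_pt d o /\ finite_pt d' o.
Proof.
have [x0 _] := h3; pose p := epsilon (inhabits x0) (is_inf d).
pose p' := epsilon (inhabits x0) (is_inf d').
have [o [hop hop']] := exists_neq2 h3 p p'; exists o; split=> hinf.
- by apply: hop; apply: (qm_inf_uniq hd) => //; apply: epsilon_spec; exists o.
- by apply: hop'; apply: (qm_inf_uniq hd') => //; apply: epsilon_spec; exists o.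
Qed.

Section BasePoint.
Variable o : X.
Hypotheses (ho : finite_pt d o) (ho' : finite_pt d' o).

Local Notation R := (rdist (involution d o)).
Local Notation R' := (rdist (involution d' o)).

Lemma involution_ratio_sym u v : R u v / R' u v = R v u / R' v u.
Proof. by rewrite /rdist (involution_sym hd ho u) (involution_sym hd' ho' u). Qed.

Lemma involution_ratio_eq x y z : x <> o -> y <> o -> z <> o -> x <> y -> y <> z -> x <> z ->
  R y z / R' y z = R x y / R' x y.
Proof.
move=> hxo hyo hzo hxy hyz hxz; have hzx := nesym hxz.
have hP : admissible (mkquad o x y z).
  by apply/admissible_of_inj/mkquad_inj => //; apply: nesym.
have [mu hmu e] := crt_d_involution hd ho hxy hyz hxz hxo hyo hzo.
have [mu' hmu' e'] := crt_d_involution hd' ho' hxy hyz hxz hxo hyo hzo.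
have Rpos := rdist_involution_gt0 hd ho; have Rpos' := rdist_involution_gt0 hd' ho'.
have [r1 r1'] := (Rpos y z hyz hyo hzo, Rpos' y z hyz hyo hzo).
have [r2 r2'] := (Rpos z x hzx hzo hxo, Rpos' z x hzx hzo hxo).
have [r3 r3'] := (Rpos x y hxy hxo hyo, Rpos' x y hxy hxo hyo).
have := hM hP; rewrite hM' // e e' (Phibar_scale hmu) // (Phibar_scale hmu') // => hPhi.
by have [_ ->] := Phibar_pos_inj r1 r2 r3 r1' r2' r3' (esym hPhi).
Qed.

Lemma involution_proportional :
  exists2 lam, 0 < lam & involution d o = rescale lam (involution d' o).
Proof.
have Rpos := rdist_involution_gt0 hd ho; have Rpos' := rdist_involution_gt0 hd' ho'.
have [a [hao _]] := exists_neq2 h3 o o; have [b [hbo /nesym hab]] := exists_neq2 h3 o a.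
have hlam : 0 < R a b / R' a b by apply: Rdiv_lt_0_compat; [apply: Rpos | apply: Rpos'].
exists (R a b / R' a b) => //.
apply: functional_extensionality => x; apply: functional_extensionality => y.
rewrite /rescale; case: (classic (x = y)) => [<- | hxy].
  by rewrite !involution_diag /=; f_equal; ring.
case: (classic (x = o)) => [exo | hxo].
  subst x; have hyo := nesym hxy.
  by rewrite (involution_o_l hd ho hyo) (involution_o_l hd' ho' hyo) Rbar_mult_pos_pinfty.
case: (classic (y = o)) => [-> | hyo].
  by rewrite (involution_o_r hd ho hxo) (involution_o_r hd' ho' hxo) Rbar_mult_pos_pinfty.
rewrite (involution_fpart hd ho) // (involution_fpart hd' ho') //.
rewrite -(rdist_involution hd ho) // -(rdist_involution hd' ho') //.
rewrite -(const_on_pairs involution_ratio_sym involution_ratio_eq hao hbo hxo hyo hab hxy) /=.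
by f_equal; field; apply: Rgt_not_eq; apply: Rpos'.
Qed.

End BasePoint.

Lemma dimN_induces : dimN d = dimN d'.
Proof.
have [o [ho ho']] := common_finite_pt; have [lam hlam e] := involution_proportional ho ho'.
by rewrite (dimN_involution h3 hd ho) (dimN_involution h3 hd' ho') e -dimN_rescale.
Qed.

End InducedMetrics.

Section PullbackMobius.
Variables (X Y : Type) (f : X -> Y) (g : Y -> X) (d : Y -> Y -> Rbar).
Hypotheses (fK : cancel f g) (gK : cancel g f).

Lemma qmetric_pullback K : qmetric d K -> qmetric (pullback f d) K.
Proof.
have finE x : finite_pt (pullback f d) x <-> finite_pt d (f x).
  by rewrite /finite_pt (is_inf_pullback _ fK gK).
move=> hd; constructor.
- exact: qm_K_ge1 hd.
- by move=> x y; apply: (qm_sym hd).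
- by move=> x y /finE hx /finE hy; apply: (qm_finite hd).
- by move=> x y; apply: (qm_ge0 hd).
- by move=> x y /finE hx /finE hy e; apply: (can_inj fK); apply: (qm_eq0 hd).
- by move=> x; apply: (qm_diag hd).
- by move=> x y z /finE hx /finE hy /finE hz; apply: (qm_quasi hd).
- move=> x y /(is_inf_pullback _ fK gK) hx /(is_inf_pullback _ fK gK) hy.
  exact/(can_inj fK)/(qm_inf_uniq hd).
Qed.

Lemma crt_d_pullback (P : quad X) : crt_d d (fun i => f (P i)) = crt_d (pullback f d) P.
Proof.
have ipE u v : infpair d (f u) (f v) = infpair (pullback f d) u v.
  rewrite /infpair; congr Defs.decP; apply: propositional_extensionality.
  rewrite (is_inf_pullback _ fK gK u) (is_inf_pullback _ fK gK v).
  by split=> -[h1 h2]; split=> // e; apply: h1; [rewrite e | apply: (can_inj fK)].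
by rewrite /crt_d /crt_prod /ninf /fpart !ipE.
Qed.

Lemma admissible_comp n (P : 'I_n -> X) : admissible P -> admissible (fun i => f (P i)).
Proof. by move=> hP i j k hij hjk hik [/(can_inj fK) e1 /(can_inj fK) e2]; apply: (hP i j k). Qed.

Lemma induces_pullback (M : quad X -> Rbar * Rbar * Rbar) (M' : quad Y -> Rbar * Rbar * Rbar) :
  (forall P : quad X, admissible P -> M' (fun i => f (P i)) = M P) ->
  induces d M' -> induces (pullback f d) M.
Proof. by move=> hMM' hM' P hP; rewrite -hMM' // hM' ?crt_d_pullback //; apply: admissible_comp. Qed.

End PullbackMobius.

Theorem theorem1p2 (X : Type) (HX : at_least_three_points X)
  (d : X -> X -> Rbar) (Hd : quasi_metric d) :
  (* rescaling *)
  (forall lam : R, (0 < lam)%R -> dimN d = dimN (rescale lam d)) /\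
  (* involution at a point o which is not the point at infinity of d *)
  (forall o : X, ~ is_inf d o -> dimN d = dimN (involution d o)) /\
  (* two quasi-metrics inducing the same intrinsic Moebius structure *)
  (forall M : quad X -> Rbar * Rbar * Rbar,
     mobius_structure M -> intrinsic M -> induces d M ->
     forall d' : X -> X -> Rbar, quasi_metric d' -> induces d' M ->
     dimN d = dimN d') /\
  (* invariance under Moebius equivalence of intrinsic Moebius spaces *)
  (forall (M : quad X -> Rbar * Rbar * Rbar) (X' : Type)
          (M' : quad X' -> Rbar * Rbar * Rbar) (d' : X' -> X' -> Rbar)
          (f : X -> X'),
     at_least_three_points X' ->
     mobius_structure M -> intrinsic M -> induces d M ->
     mobius_structure M' -> intrinsic M' -> quasi_metric d' -> induces d' M' ->
     mobius_equivalence M M' f ->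
     dimN d = dimN d').
Proof.
have [K hd] := qmetric_of_quasi_metric HX Hd.
split; [| split; [| split]].
- by move=> lam hlam; apply: dimN_rescale.
- by move=> o ho; apply: dimN_involution HX hd ho.
-
  move=> M _ _ hM d' /(qmetric_of_quasi_metric HX) [K' hd'] hM'.
  exact: dimN_induces HX hd hd' hM hM'.
- move=> M X' M' d' f HX' _ _ hM _ _ /(qmetric_of_quasi_metric HX') [K' hd'] hM' [hf hMM'].
  rewrite -(dimN_pullback d' hf); case: hf => g fK gK.
  exact: dimN_induces HX hd (qmetric_pullback fK gK hd') hM (induces_pullback fK gK hMM' hM').
Qed.
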